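(* Let $\alpha>0$, $\beta>0$, $M\in\mathbb{R}$, and let $H:=\frac12\bigl(\frac{6\alpha}{\beta M^2}\bigr)^{1/3}$, $V:=MH$ (with the understanding that the canonical staircase $S_{H,V}$ is identically $0$ when $M=0$). Then the set of entire local minimizers of $\mathcal{G}(\alpha,\beta,Mx,\cdot,\cdot)$ coincides with the set $\mathrm{Obl}(H,V)$ of oblique translations of $S_{H,V}$ (in particular, when $M=0$ the only entire local minimizer is the zero function).
   Context: For a bounded interval $(a,b)$, $S((a,b))$ is the space of step functions with finitely many jumps (BV functions with zero diffuse derivative and finite jump set $S_u$), with $u(a),u(b)$ denoting the values near the endpoints; $S_{loc}(\mathbb{R})$ is the set of $u:\mathbb{R}\to\mathbb{R}$ whose restriction to every bounded interval lies in $S((a,b))$. $\mathcal{G}(\alpha,\beta,f,(a,b),u)=\alpha\,\#(S_u\cap(a,b))+\beta\int_a^b(u-f)^2dx$. A function $v\in S((a,b))$ is a local minimizer of $\mathcal{G}(\alpha,\beta,f,(a,b),\cdot)$ if $\mathcal{G}(\alpha,\beta,f,(a,b),v)\le\mathcal{G}(\alpha,\beta,f,(a,b),u)$ for all $u\in S((a,b))$ with $u(a)=v(a)$, $u(b)=v(b)$; $v\in S_{loc}(\mathbb{R})$ is an entire local minimizer if its restriction to every bounded interval is a local minimizer there. Here $f$ is $x\mapsto Mx$. Canonical staircase: $S(x)=2\lfloor(x+1)/2\rfloor$, $S_{H,V}(x)=V\,S(x/H)$; $\mathrm{Obl}(H,V)$ is the set of functions $x\mapsto S_{H,V}(x-H\tau_0)+V\tau_0$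 with $\tau_0\in[-1,1]$. *)

From Stdlib Require Import Reals List.
From Coquelicot Require Import Coquelicot.
Open Scope R_scope.

(* Values at
   those finitely many points are arbitrary (irrelevant for the BV class). *)
Definition is_step (a b : R) (u : R -> R) : Prop :=
  exists l : list R,
    (forall x, In x l -> a < x < b) /\
    (forall x y, a < x -> x <= y -> y < b ->
       (forall z, In z l -> ~ (x <= z <= y)) -> u x = u y).

Definition is_jump (u : R -> R) (x : R) : Prop :=
  forall eps, 0 < eps ->
    exists y z, Rabs (y - x) < eps /\ y <> x /\ Rabs (z - x) < eps /\ z <> x
                /\ u y <> u z.

Definition jump_count (a b : R) (u : R -> R) (n : nat) : Prop :=
  exists l : list R, NoDup l /\ length l = n /\
    (forall x, In x l <-> (a < x < b /\ is_jump u x)).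

(* G(alpha,beta,f,(a,b),u) given that #(S_u ∩ (a,b)) = n *)
Definition G_with (alpha beta : R) (f : R -> R) (a b : R) (u : R -> R) (n : nat) : R :=
  alpha * INR n + beta * RInt (fun x => (u x - f x) ^ 2) a b.

(* u(a) = v(a), u(b) = v(b): the values near the endpoints agree *)
Definition same_traces (a b : R) (u v : R -> R) : Prop :=
  (exists eps, 0 < eps /\ forall x, a < x < a + eps -> u x = v x) /\
  (exists eps, 0 < eps /\ forall x, b - eps < x < b -> u x = v x).

Definition local_minimizer (alpha beta : R) (f : R -> R) (a b : R) (v : R -> R) : Prop :=
  is_step a b v /\
  forall u, is_step a b u -> same_traces a b u v ->
    forall n m, jump_count a b v n -> jump_count a b u m ->
      G_with alpha beta f a b v n <= G_with alpha beta f a b u m.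

Definition S_loc (v : R -> R) : Prop := forall a b, a < b -> is_step a b v.

Definition entire_local_minimizer (alpha beta : R) (f : R -> R) (v : R -> R) : Prop :=
  S_loc v /\ forall a b, a < b -> local_minimizer alpha beta f a b v.

Definition stair (x : R) : R := 2 * IZR (floor ((x + 1) / 2)).
Definition stairHV (H V : R) (x : R) : R := V * stair (x / H).

Definition Hpar (alpha beta M : R) : R := / 2 * Rpower (6 * alpha / (beta * M ^ 2)) (/ 3).
Definition Vpar (alpha beta M : R) : R := M * Hpar alpha beta M.

Definition oblique (alpha beta M tau0 : R) (x : R) : R :=
  if Req_EM_T M 0 then 0
  else stairHV (Hpar alpha beta M) (Vpar alpha beta M) (x - Hpar alpha beta M * tau0)
       + Vpar alpha beta M * tau0.

(* v agrees with w except at finitely many points of every bounded interval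
   (i.e. v and w represent the same element of S_loc) *)
Definition same_class (v w : R -> R) : Prop :=
  forall a b, a < b -> exists l : list R,
    forall x, a < x < b -> ~ In x l -> v x = w x.

(* For M > 0 put Y := V = M H, so that alpha = 4 beta Y^3 / (3 M).  The function
   Phi(x, c) = beta Y^2 x + g(c - M x), with g(y) = (beta Y^2 y - beta y^3 / 3) / M on the band
   |y| <= Y and g = +-alpha/2 outside it, calibrates the functional: for a step function u with
   traces c0 at a and c1 at b, G(u) - Phi(b, c1) + Phi(a, c0) is a sum of nonnegative contributions
   of the constancy pieces and of the jumps.  It vanishes exactly when all traces lie in the band and
   every jump goes from c - M x = -Y to +Y; these functions are the oblique staircases, which are
   therefore minimizers.  Conversely a minimizer has zero deficit on every interval: far from the
   band the deficit grows linearly with the length, so the interval can be enlarged to endpoints close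
   to the band, and there a fine staircase with many small jumps has arbitrarily small deficit.
   For M = 0 a two-jump competitor bounds the energy of a minimizer by 3 alpha on every interval,
   so it has at most two jumps, vanishes near +-infinity, and then everywhere.  M < 0 follows by
   the symmetry v -> -v. *)

From Stdlib Require Import Reals Lra Lia List ZArith ClassicalEpsilon Classical FunctionalExtensionality.
From Coquelicot Require Import Coquelicot.
Open Scope R_scope.

(** * Step functions, traces and jumps *)

Definition const_on (u : R -> R) (a b c : R) : Prop := forall x, a < x < b -> u x = c.

Definition right_trace (u : R -> R) (p c : R) : Prop := exists e, 0 < e /\ const_on u p (p + e) c.
Definition left_trace (u : R -> R) (p c : R) : Prop := exists e, 0 < e /\ const_on u (p - e) p c.

Ltac Rmin_facts x y := pose proof (Rmin_l x y); pose proof (Rmin_r x y).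

Lemma finite_gap (l : list R) (p : R) :
  exists e, 0 < e /\ forall z, In z l -> z <> p -> ~ (p - e < z < p + e).
Proof.
  induction l as [|z l [e [He Hl]]].
  - exists 1; split; [lra | intros z []].
  - destruct (Req_dec z p) as [-> | Hzp].
    + exists e; split; [exact He |]. intros w [<- | Hw] Hwp; [congruence | auto].
    + exists (Rmin e (Rabs (z - p))); split.
      { apply Rmin_pos; [exact He | apply Rabs_pos_lt; lra]. }
      Rmin_facts e (Rabs (z - p)).
      intros w [-> | Hw] Hwp Hin.
      * revert Hin; unfold Rabs in *; destruct (Rcase_abs (w - p)); lra.
      * apply (Hl w Hw Hwp); lra.
Qed.

Lemma const_on_sub u a b a' b' c : const_on u a b c -> a <= a' -> b' <= b -> const_on u a' b' c.
Proof. intros H Ha Hb x Hx; apply H; lra. Qed.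

Lemma right_trace_of_const u a b c p : const_on u a b c -> a <= p < b -> right_trace u p c.
Proof. intros H Hp. exists (b - p); split; [lra |]. apply (const_on_sub u a b); [exact H | lra | lra]. Qed.

Lemma left_trace_of_const u a b c p : const_on u a b c -> a < p <= b -> left_trace u p c.
Proof. intros H Hp. exists (p - a); split; [lra |]. apply (const_on_sub u a b); [exact H | lra | lra]. Qed.

Lemma right_trace_unique u p c c' : right_trace u p c -> right_trace u p c' -> c = c'.
Proof.
  intros [e [He H]] [e' [He' H']]. Rmin_facts e e'.
  rewrite <- (H (p + Rmin e e' / 2)), <- (H' (p + Rmin e e' / 2)); auto;
    pose proof (Rmin_pos e e' He He'); lra.
Qed.

Lemma left_trace_unique u p c c' : left_trace u p c -> left_trace u p c' -> c = c'.
Proof.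
  intros [e [He H]] [e' [He' H']]. Rmin_facts e e'.
  rewrite <- (H (p - Rmin e e' / 2)), <- (H' (p - Rmin e e' / 2)); auto;
    pose proof (Rmin_pos e e' He He'); lra.
Qed.

(* [is_step a b u] unfolds to [exists l, step_on l a b u]. *)
Definition step_on (l : list R) (a b : R) (u : R -> R) : Prop :=
  (forall x, In x l -> a < x < b) /\
  (forall x y, a < x -> x <= y -> y < b -> (forall z, In z l -> ~ (x <= z <= y)) -> u x = u y).

Definition locally_const (v : R -> R) (x : R) : Prop :=
  exists e, 0 < e /\ const_on v (x - e) (x + e) (v x).

Lemma locally_const_of_const_on v s t c x : const_on v s t c -> s < x < t -> locally_const v x.
Proof.
  intros H Hx. Rmin_facts (x - s) (t - x). exists (Rmin (x - s) (t - x)).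
  split; [apply Rmin_pos; lra |]. intros y Hy. rewrite !H; auto; lra.
Qed.

Lemma step_on_locally_const l a b u x : step_on l a b u -> a < x < b -> ~ In x l -> locally_const u x.
Proof.
  intros [Hl Hs] Hx Hn. destruct (finite_gap l x) as [e [He Hgap]].
  Rmin_facts e (Rmin (x - a) (b - x)); Rmin_facts (x - a) (b - x).
  set (r := Rmin e (Rmin (x - a) (b - x))) in *.
  assert (0 < r) by (repeat apply Rmin_pos; lra).
  exists r; split; [assumption |]. intros y Hy.
  assert (Hfree : forall s t, x - r < s -> t < x + r -> forall z, In z l -> ~ (s <= z <= t)).
  { intros s t Hs' Ht z Hz Hc. destruct (Req_dec z x) as [-> | Hzx]; [tauto |].
    apply (Hgap z Hz Hzx); lra. }
  destruct (Rle_dec y x).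
  - apply Hs; try lra. apply Hfree; lra.
  - symmetry; apply Hs; try lra. apply Hfree; lra.
Qed.

Lemma locally_const_right_trace v x : locally_const v x -> right_trace v x (v x).
Proof. intros [e [He H]]. exists e; split; [exact He |]. apply (const_on_sub v (x - e) (x + e)); [exact H | lra | lra]. Qed.

Lemma locally_const_left_trace v x : locally_const v x -> left_trace v x (v x).
Proof. intros [e [He H]]. exists e; split; [exact He |]. apply (const_on_sub v (x - e) (x + e)); [exact H | lra | lra]. Qed.

Lemma is_step_right_trace a b u p : is_step a b u -> a <= p < b -> exists c, right_trace u p c.
Proof.
  intros [l [Hl Hs]] Hp. destruct (finite_gap l p) as [e [He Hgap]].
  Rmin_facts e (b - p). set (r := Rmin e (b - p)) in *. assert (0 < r) by (apply Rmin_pos; lra).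
  exists (u (p + r / 2)), r; split; [assumption |]. intros x Hx.
  assert (Hfree : forall s t, p < s -> t < p + r -> forall z, In z l -> ~ (s <= z <= t)).
  { intros s t Hs' Ht z Hz Hc. apply (Hgap z Hz); lra. }
  destruct (Rle_dec x (p + r / 2)).
  - apply Hs; try lra. apply Hfree; lra.
  - symmetry; apply Hs; try lra. apply Hfree; lra.
Qed.

Lemma is_step_left_trace a b u p : is_step a b u -> a < p <= b -> exists c, left_trace u p c.
Proof.
  intros [l [Hl Hs]] Hp. destruct (finite_gap l p) as [e [He Hgap]].
  Rmin_facts e (p - a). set (r := Rmin e (p - a)) in *. assert (0 < r) by (apply Rmin_pos; lra).
  exists (u (p - r / 2)), r; split; [assumption |]. intros x Hx.
  assert (Hfree : forall s t, p - r < s -> t < p -> forall z, In z l -> ~ (s <= z <= t)).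
  { intros s t Hs' Ht z Hz Hc. apply (Hgap z Hz); lra. }
  destruct (Rle_dec x (p - r / 2)).
  - apply Hs; try lra. apply Hfree; lra.
  - symmetry; apply Hs; try lra. apply Hfree; lra.
Qed.

Definition in_open (s t z : R) : bool :=
  if Rlt_dec s z then if Rlt_dec z t then true else false else false.

Lemma in_open_spec s t z : in_open s t z = true <-> s < z < t.
Proof. unfold in_open; destruct (Rlt_dec s z), (Rlt_dec z t); split; intros; try lra; easy. Qed.

Lemma step_on_restrict l a b u s t :
  step_on l a b u -> a <= s -> t <= b -> step_on (filter (in_open s t) l) s t u.
Proof.
  intros [Hl Hs] Has Htb. split.
  - intros x Hx. apply filter_In in Hx as [_ Hx]. now apply in_open_spec.
  - intros x y Hx Hxy Hy Hn. apply Hs; try lra. intros z Hz Hc.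
    apply (Hn z); auto. apply filter_In; split; auto. apply in_open_spec; lra.
Qed.

Lemma is_step_restrict a b u s t : is_step a b u -> a <= s -> t <= b -> is_step s t u.
Proof. intros [l Hl] Hs Ht. exists (filter (in_open s t) l). now apply (step_on_restrict l a b). Qed.

Lemma is_step_glue a p b u : a < p < b -> is_step a p u -> is_step p b u -> is_step a b u.
Proof.
  intros Hp [l1 [Hl1 Hs1]] [l2 [Hl2 Hs2]]. exists (l1 ++ p :: l2); split.
  - intros x Hx. apply in_app_or in Hx as [Hx | [<- | Hx]];
      [apply Hl1 in Hx | lra | apply Hl2 in Hx]; lra.
  - intros x y Hx Hxy Hy Hn.
    assert (~ (x <= p <= y)) by (apply Hn, in_or_app; right; left; reflexivity).
    destruct (Rlt_dec y p).
    + apply Hs1; try lra. intros z Hz; apply Hn, in_or_app; left; exact Hz.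
    + apply Hs2; try lra. intros z Hz; apply Hn, in_or_app; right; right; exact Hz.
Qed.

Lemma is_step_const a b u c : const_on u a b c -> is_step a b u.
Proof. intros H. exists nil; split; [intros x [] |]. intros x y Hx Hxy Hy _. rewrite !H; auto; lra. Qed.

Lemma is_step_ind (u : R -> R) (P : R -> R -> Prop) :
  (forall a b c, a < b -> const_on u a b c -> P a b) ->
  (forall a p b, a < p < b -> is_step a p u -> is_step p b u -> P a p -> P p b -> P a b) ->
  forall a b, a < b -> is_step a b u -> P a b.
Proof.
  intros Hconst Hsplit.
  enough (H : forall n l a b, (length l <= n)%nat -> a < b -> step_on l a b u -> P a b)
    by (intros a b Hab [l Hl]; exact (H _ l a b (le_n _) Hab Hl)).
  induction n as [|n IH]; intros [|p l] a b Hlen Hab Hl.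
  1, 3: apply (Hconst a b (u ((a + b) / 2)) Hab); intros x Hx;
        destruct (Rle_dec x ((a + b) / 2));
        [| symmetry]; apply (proj2 Hl); try lra; intros z [].
  { simpl in Hlen; lia. }
  assert (Hp : a < p < b) by (apply (proj1 Hl); left; reflexivity).
  assert (Hshort : forall s t, (s < p /\ t = p) \/ (s = p /\ p < t) ->
                     (length (filter (in_open s t) (p :: l)) <= n)%nat).
  { intros s t Hst. simpl. destruct (in_open s t p) eqn:E.
    - apply in_open_spec in E; lra.
    - simpl in Hlen. pose proof (filter_length_le (in_open s t) l). lia. }
  apply (Hsplit a p b Hp).
  - exists (filter (in_open a p) (p :: l)). apply (step_on_restrict _ a b); [exact Hl | lra | lra].
  - exists (filter (in_open p b) (p :: l)). apply (step_on_restrict _ a b); [exact Hl | lra | lra].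
  - apply (IH (filter (in_open a p) (p :: l))); [apply Hshort; lra | lra |].
    apply (step_on_restrict _ a b); [exact Hl | lra | lra].
  - apply (IH (filter (in_open p b) (p :: l))); [apply Hshort; lra | lra |].
    apply (step_on_restrict _ a b); [exact Hl | lra | lra].
Qed.

Lemma const_on_traces u a b c c0 c1 : a < b -> const_on u a b c ->
  right_trace u a c0 -> left_trace u b c1 -> c0 = c /\ c1 = c.
Proof.
  intros Hab H H0 H1. split.
  - apply (right_trace_unique u a); [exact H0 | apply (right_trace_of_const u a b); [exact H | lra]].
  - apply (left_trace_unique u b); [exact H1 | apply (left_trace_of_const u a b); [exact H | lra]].
Qed.

Lemma is_jump_iff u p c c' : left_trace u p c -> right_trace u p c' -> (is_jump u p <-> c <> c').
Proof.
  intros [e [He H]] [e' [He' H']]. Rmin_facts e e'. set (r := Rmin e e') in *.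
  assert (0 < r) by (apply Rmin_pos; lra). split.
  - intros J ->. destruct (J r) as [y [z [Hy [Hy' [Hz [Hz' Hne]]]]]]; [assumption |].
    apply Hne. assert (Hnear : forall w, Rabs (w - p) < r -> w <> p -> u w = c').
    { intros w Hw Hwp. apply Rabs_def2 in Hw. destruct (Rlt_dec w p).
      - apply H; lra.
      - apply H'. split; [| lra]. destruct (Rle_lt_or_eq_dec p w); [lra | lra | congruence]. }
    rewrite !Hnear; auto.
  - intros Hne eps Heps. Rmin_facts eps r. set (s := Rmin eps r) in *.
    assert (0 < s) by (apply Rmin_pos; lra).
    exists (p - s / 2), (p + s / 2). repeat split.
    + rewrite Rabs_left; lra.
    + lra.
    + rewrite Rabs_right; lra.
    + lra.
    + rewrite H, H'; [exact Hne | lra | lra].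
Qed.

Definition jump_ind (c c' : R) : nat := if Req_EM_T c c' then 0 else 1.

Lemma jump_count_unique a b u n m : jump_count a b u n -> jump_count a b u m -> n = m.
Proof.
  intros [l1 [N1 [<- H1]]] [l2 [N2 [<- H2]]].
  assert (incl l1 l2) by (intros x Hx; apply H2, H1, Hx).
  assert (incl l2 l1) by (intros x Hx; apply H1, H2, Hx).
  pose proof (NoDup_incl_length N1 H). pose proof (NoDup_incl_length N2 H0). lia.
Qed.

Lemma jump_count_const a b u c : const_on u a b c -> jump_count a b u 0.
Proof.
  intros H. exists nil; split; [constructor | split; [reflexivity |]].
  intros x; split; [intros [] |]. intros [Hx J]. exfalso.
  apply (is_jump_iff u x c c); [| | exact J | reflexivity].
  - apply (left_trace_of_const u a b); [exact H | lra].
  - apply (right_trace_of_const u a b); [exact H | lra].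
Qed.

Lemma jump_count_split a p b u n1 n2 c c' :
  a < p < b -> jump_count a p u n1 -> jump_count p b u n2 ->
  left_trace u p c -> right_trace u p c' ->
  jump_count a b u (n1 + n2 + jump_ind c c').
Proof.
  intros Hp [l1 [N1 [<- H1]]] [l2 [N2 [<- H2]]] HL HR.
  pose proof (is_jump_iff u p c c' HL HR) as Jp.
  assert (Hsplit : forall x, a < x < b /\ is_jump u x <->
             (a < x < p /\ is_jump u x) \/ (x = p /\ c <> c') \/ (p < x < b /\ is_jump u x)).
  { intros x; split.
    - intros [Hx J]. destruct (Rtotal_order x p) as [Hxp | [-> | Hxp]]; [left | right; left | right; right].
      + split; [lra | exact J].
      + split; [reflexivity | now apply Jp].
      + split; [lra | exact J].
    - intros [[Hx J] | [[-> Hne] | [Hx J]]]; (split; [lra |]); auto. now apply Jp. }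
  assert (Hdisj : forall x, In x l1 -> ~ In x l2) by (intros x Hx Hx'; apply H1 in Hx; apply H2 in Hx'; lra).
  unfold jump_ind. destruct (Req_EM_T c c') as [Heq | Hne].
  - exists (l1 ++ l2). split; [now apply NoDup_app |]. split; [rewrite length_app; lia |].
    intros x. rewrite in_app_iff, H1, H2, Hsplit. tauto.
  - exists (l1 ++ p :: l2). split; [| split; [rewrite length_app; simpl; lia |]].
    + apply NoDup_app; auto.
      * constructor; [rewrite H2; lra | exact N2].
      * intros x Hx [<- | Hx']; [apply H1 in Hx; lra | exact (Hdisj x Hx Hx')].
    + intros x. rewrite in_app_iff, H1. simpl. rewrite H2, Hsplit. intuition congruence.
Qed.

Lemma jump_count_exists a b u : a < b -> is_step a b u -> exists n, jump_count a b u n.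
Proof.
  apply (is_step_ind u (fun a b => exists n, jump_count a b u n)).
  - intros a' b' c _ H. exists 0%nat. exact (jump_count_const a' b' u c H).
  - intros a' p b' Hp S1 S2 [n1 J1] [n2 J2].
    destruct (is_step_left_trace a' p u p S1) as [c Hc]; [lra |].
    destruct (is_step_right_trace p b' u p S2) as [c' Hc']; [lra |].
    eexists; exact (jump_count_split a' p b' u n1 n2 c c' Hp J1 J2 Hc Hc').
Qed.

(* Meaningful only when [is_step a b u]; otherwise an arbitrary number. *)
Definition njumps (a b : R) (u : R -> R) : nat := epsilon (inhabits 0%nat) (jump_count a b u).

Lemma njumps_spec a b u : a < b -> is_step a b u -> jump_count a b u (njumps a b u).
Proof. intros Hab Hs. unfold njumps. apply epsilon_spec, jump_count_exists; assumption. Qed.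

Lemma njumps_eq a b u n : a < b -> is_step a b u -> jump_count a b u n -> njumps a b u = n.
Proof. intros Hab Hs Hn. exact (jump_count_unique a b u _ _ (njumps_spec a b u Hab Hs) Hn). Qed.

Lemma njumps_split a p b u c c' : a < p < b -> is_step a b u ->
  left_trace u p c -> right_trace u p c' ->
  njumps a b u = (njumps a p u + njumps p b u + jump_ind c c')%nat.
Proof.
  intros Hp Hs HL HR. apply njumps_eq; [lra | exact Hs |].
  apply (jump_count_split a p b u); try assumption;
    apply njumps_spec; try lra; apply (is_step_restrict a b); auto; lra.
Qed.

Definition jumps_of_size (d : R) (v : R -> R) : Prop :=
  forall p c c', left_trace v p c -> right_trace v p c' -> c <> c' -> c' - c = d.

(** * Energy *)

(* The integral of (c - M x)^2 over (s, t). *)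
Definition bulk_const (M c s t : R) : R := c ^ 2 * (t - s) - c * M * (t ^ 2 - s ^ 2) + M ^ 2 * (t ^ 3 - s ^ 3) / 3.

Definition energy (al be M : R) (u : R -> R) (a b : R) : R :=
  al * INR (njumps a b u) + be * RInt (fun x => (u x - M * x) ^ 2) a b.

Lemma is_RInt_const_on M u c s t : s < t -> const_on u s t c ->
  is_RInt (fun x => (u x - M * x) ^ 2) s t (bulk_const M c s t).
Proof.
  intros Hst H. apply (is_RInt_ext (fun x => (c - M * x) ^ 2)).
  { intros x Hx. rewrite Rmin_left, Rmax_right in Hx by lra. rewrite H; auto. }
  replace (bulk_const M c s t)
    with ((c ^ 2 * t - c * M * t ^ 2 + M ^ 2 * t ^ 3 / 3) - (c ^ 2 * s - c * M * s ^ 2 + M ^ 2 * s ^ 3 / 3))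
    by (unfold bulk_const; field).
  apply (is_RInt_derive (fun x => c ^ 2 * x - c * M * x ^ 2 + M ^ 2 * x ^ 3 / 3)).
  - intros x _. auto_derive; [exact I | field].
  - intros x _. apply (ex_derive_continuous (fun x => (c - M * x) ^ 2)). auto_derive. exact I.
Qed.

Lemma ex_RInt_step M u a b : a < b -> is_step a b u -> ex_RInt (fun x => (u x - M * x) ^ 2) a b.
Proof.
  apply (is_step_ind u (fun a b => ex_RInt _ a b)).
  - intros a' b' c Hab H. eexists. exact (is_RInt_const_on M u c a' b' Hab H).
  - intros a' p b' _ _ _ H1 H2. exact (ex_RInt_Chasles _ a' p b' H1 H2).
Qed.

Lemma energy_split al be M u a p b c c' : a < p < b -> is_step a b u ->
  left_trace u p c -> right_trace u p c' ->
  energy al be M u a b = energy al be M u a p + energy al be M u p b + al * INR (jump_ind c c').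
Proof.
  intros Hp Hs HL HR. unfold energy.
  rewrite (njumps_split a p b u c c' Hp Hs HL HR), !plus_INR.
  rewrite <- (RInt_Chasles _ a p b); [unfold plus; simpl; ring | |];
    apply ex_RInt_step; try lra; apply (is_step_restrict a b); auto; lra.
Qed.

Lemma energy_const al be M u a b c : a < b -> const_on u a b c ->
  energy al be M u a b = be * bulk_const M c a b.
Proof.
  intros Hab H. unfold energy.
  rewrite (njumps_eq a b u 0 Hab (is_step_const a b u c H) (jump_count_const a b u c H)).
  rewrite (is_RInt_unique _ _ _ _ (is_RInt_const_on M u c a b Hab H)). simpl; ring.
Qed.

Lemma energy_ge_jumps al be M u a b : 0 <= be -> a < b -> is_step a b u ->
  al * INR (njumps a b u) <= energy al be M u a b.
Proof.
  intros Hbe Hab Hs. unfold energy.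
  assert (0 <= RInt (fun x => (u x - M * x) ^ 2) a b).
  { apply RInt_ge_0; [lra | apply ex_RInt_step; auto | intros; apply pow2_ge_0]. }
  nra.
Qed.

Lemma G_with_energy al be M u a b n : a < b -> is_step a b u -> jump_count a b u n ->
  G_with al be (fun x => M * x) a b u n = energy al be M u a b.
Proof. intros Hab Hs Hn. unfold G_with, energy. now rewrite (njumps_eq a b u n). Qed.

Lemma same_traces_of_traces a b u v c0 c1 :
  right_trace u a c0 -> left_trace u b c1 -> right_trace v a c0 -> left_trace v b c1 ->
  same_traces a b u v.
Proof.
  intros [e1 [He1 U1]] [e2 [He2 U2]] [e3 [He3 V1]] [e4 [He4 V2]].
  Rmin_facts e1 e3; Rmin_facts e2 e4. split.
  - exists (Rmin e1 e3); split; [now apply Rmin_pos |]. intros x Hx. rewrite U1, V1; auto; lra.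
  - exists (Rmin e2 e4); split; [now apply Rmin_pos |]. intros x Hx. rewrite U2, V2; auto; lra.
Qed.

Lemma right_trace_same_traces a b u v c : a < b -> same_traces a b u v ->
  right_trace v a c -> right_trace u a c.
Proof.
  intros Hab [[e [He H]] _] [e' [He' H']]. Rmin_facts e e'.
  exists (Rmin e e'); split; [now apply Rmin_pos |]. intros x Hx. rewrite H by lra. apply H'; lra.
Qed.

Lemma left_trace_same_traces a b u v c : a < b -> same_traces a b u v ->
  left_trace v b c -> left_trace u b c.
Proof.
  intros Hab [_ [e [He H]]] [e' [He' H']]. Rmin_facts e e'.
  exists (Rmin e e'); split; [now apply Rmin_pos |]. intros x Hx. rewrite H by lra. apply H'; lra.
Qed.

Lemma minimizer_energy_le al be M v u a b c0 c1 :
  entire_local_minimizer al be (fun x => M * x) v -> a < b -> is_step a b u ->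
  right_trace u a c0 -> left_trace u b c1 -> right_trace v a c0 -> left_trace v b c1 ->
  energy al be M v a b <= energy al be M u a b.
Proof.
  intros [_ Hmin] Hab Hu U0 U1 V0 V1. destruct (Hmin a b Hab) as [Hv Hle].
  rewrite <- (G_with_energy al be M v a b _ Hab Hv (njumps_spec a b v Hab Hv)).
  rewrite <- (G_with_energy al be M u a b _ Hab Hu (njumps_spec a b u Hab Hu)).
  apply Hle; auto using njumps_spec.
  exact (same_traces_of_traces a b u v c0 c1 U0 U1 V0 V1).
Qed.

(** * Calibration *)

Lemma affine_le_left_end M a b c K : 0 < M -> a < b ->
  (forall x, a < x < b -> c - M * x <= K) -> c - M * a <= K.
Proof.
  intros HM Hab H. apply Rnot_lt_le. intros Hlt.
  Rmin_facts ((b - a) / 2) ((c - M * a - K) / (2 * M)).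
  set (t := Rmin ((b - a) / 2) ((c - M * a - K) / (2 * M))) in *.
  assert (0 < t) by (apply Rmin_pos; apply Rdiv_lt_0_compat; lra).
  apply Rle_div_r in H1; [| lra].
  specialize (H (a + t)). nra.
Qed.

Lemma affine_ge_right_end M a b c K : 0 < M -> a < b ->
  (forall x, a < x < b -> K <= c - M * x) -> K <= c - M * b.
Proof.
  intros HM Hab H. apply Rnot_lt_le. intros Hlt.
  Rmin_facts ((b - a) / 2) ((K - (c - M * b)) / (2 * M)).
  set (t := Rmin ((b - a) / 2) ((K - (c - M * b)) / (2 * M))) in *.
  assert (0 < t) by (apply Rmin_pos; apply Rdiv_lt_0_compat; lra).
  apply Rle_div_r in H1; [| lra].
  specialize (H (b - t)). nra.
Qed.

Lemma floor_spec x : IZR (floor x) <= x < IZR (floor x) + 1.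
Proof. unfold floor. destruct (floor_ex x) as [n Hn]. exact Hn. Qed.

Lemma floor_eq n x : IZR n <= x < IZR n + 1 -> floor x = n.
Proof.
  intros H. pose proof (floor_spec x).
  assert (IZR (floor x) < IZR (n + 1)) by (rewrite plus_IZR; lra).
  assert (IZR n < IZR (floor x + 1)) by (rewrite plus_IZR; lra).
  apply lt_IZR in H1, H2. lia.
Qed.

Lemma floor_le x y : x <= y -> (floor x <= floor y)%Z.
Proof.
  intros H. pose proof (floor_spec x). pose proof (floor_spec y).
  assert (IZR (floor x) < IZR (floor y + 1)) by (rewrite plus_IZR; lra).
  apply lt_IZR in H2. lia.
Qed.

Section Calibration.

Variables al be M Y : R.
Hypothesis be_pos : 0 < be.
Hypothesis M_pos : 0 < M.
Hypothesis Y_pos : 0 < Y.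
(* With [Y = M H] and the H of the statement this is [beta M^2 H^3 = 3 alpha / 4]. *)
Hypothesis al_eq : al = 4 * be * Y ^ 3 / (3 * M).

Definition band_cubic (y : R) : R := be * y ^ 3 / 3 - be * Y ^ 2 * y.
Definition clamp (y : R) : R := Rmax (- Y) (Rmin Y y).
Definition potential (y : R) : R := - band_cubic (clamp y) / M.
(* Inside the band [|c - M x| <= Y] the x-derivative of [calibration x c] is [be (c - M x)^2],
   and across the band the potential increases by exactly [al]. *)
Definition calibration (x c : R) : R := be * Y ^ 2 * x + potential (c - M * x).
Definition excess (y : R) : R := band_cubic y - band_cubic (clamp y).

Definition deficit (u : R -> R) (a b c0 c1 : R) : R :=
  energy al be M u a b - calibration b c1 + calibration a c0.
Definition piece_deficit (s t c : R) : R := (excess (c - M * s) - excess (c - M * t)) / M.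
Definition jump_deficit (p c c' : R) : R :=
  al * INR (jump_ind c c') - (potential (c' - M * p) - potential (c - M * p)).

Lemma clamp_low y : y <= - Y -> clamp y = - Y.
Proof. intros. unfold clamp. rewrite Rmin_right, Rmax_left; lra. Qed.
Lemma clamp_mid y : - Y <= y <= Y -> clamp y = y.
Proof. intros. unfold clamp. rewrite Rmin_right, Rmax_right; lra. Qed.
Lemma clamp_high y : Y <= y -> clamp y = Y.
Proof. intros. unfold clamp. rewrite Rmin_left, Rmax_right; lra. Qed.

Lemma clamp_cases y :
  (y <= - Y /\ clamp y = - Y) \/ (- Y <= y <= Y /\ clamp y = y) \/ (Y <= y /\ clamp y = Y).
Proof.
  destruct (Rle_dec y (- Y)); [left; split; [| apply clamp_low]; lra |].
  destruct (Rle_dec y Y); right; [left | right]; (split; [| first [apply clamp_mid | apply clamp_high]]); lra.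
Qed.

Lemma clamp_lipschitz y y' : y' <= y -> 0 <= clamp y - clamp y' <= y - y'.
Proof. intros. destruct (clamp_cases y) as [[? ->]|[[? ->]|[? ->]]], (clamp_cases y') as [[? ->]|[[? ->]|[? ->]]]; lra. Qed.

Lemma band_cubic_sub s t : band_cubic s - band_cubic t = (s - t) * (be * ((s ^ 2 + s * t + t ^ 2) / 3 - Y ^ 2)).
Proof. unfold band_cubic. field. Qed.

Lemma band_cubic_lt_out s t : t < s -> Y <= t \/ s <= - Y -> band_cubic t < band_cubic s.
Proof.
  intros Hts Hout. enough (0 < band_cubic s - band_cubic t) by lra.
  rewrite band_cubic_sub. apply Rmult_lt_0_compat; [lra |]. apply Rmult_lt_0_compat; [lra |].
  destruct Hout; nra.
Qed.

Lemma band_cubic_le_out s t : t <= s -> Y <= t \/ s <= - Y -> band_cubic t <= band_cubic s.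
Proof. intros [Hts | <-] Hout; [left; now apply band_cubic_lt_out | right; reflexivity]. Qed.

Lemma band_cubic_bound z : - Y <= z <= Y -> Rabs (band_cubic z) <= 2 * be * Y ^ 3 / 3.
Proof.
  intros Hz. apply Rabs_le. unfold band_cubic.
  assert (0 <= be * (z - Y) ^ 2 * (z + 2 * Y)) by (apply Rmult_le_pos; [apply Rmult_le_pos; [lra | apply pow2_ge_0] | lra]).
  assert (0 <= be * (z + Y) ^ 2 * (2 * Y - z)) by (apply Rmult_le_pos; [apply Rmult_le_pos; [lra | apply pow2_ge_0] | lra]).
  split; nra.
Qed.

Lemma calibrated_al_pos : 0 < al.
Proof. rewrite al_eq. apply Rdiv_lt_0_compat; [| lra]. pose proof (pow_lt Y 3 Y_pos). nra. Qed.

Lemma Rdiv_le_M x y : x <= y -> x / M <= y / M.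
Proof. intros. apply Rmult_le_compat_r; [left; apply Rinv_0_lt_compat |]; lra. Qed.

Lemma half_al : al / 2 = 2 * be * Y ^ 3 / 3 / M.
Proof. rewrite al_eq. field. lra. Qed.

Lemma potential_high y : Y <= y -> potential y = al / 2.
Proof. intros. unfold potential. rewrite clamp_high, half_al by assumption. unfold band_cubic. field. lra. Qed.
Lemma potential_low y : y <= - Y -> potential y = - (al / 2).
Proof. intros. unfold potential. rewrite clamp_low, half_al by assumption. unfold band_cubic. field. lra. Qed.
Lemma potential_mid y : - Y <= y <= Y -> potential y = - band_cubic y / M.
Proof. intros. unfold potential. now rewrite clamp_mid. Qed.

Lemma potential_bound y : - (al / 2) <= potential y <= al / 2.
Proof.
  unfold potential. rewrite half_al.
  assert (Hc : - Y <= clamp y <= Y) by (destruct (clamp_cases y) as [[? ->]|[[? ->]|[? ->]]]; lra).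
  apply band_cubic_bound, Rabs_le_between in Hc.
  split; [replace (- (2 * be * Y ^ 3 / 3 / M)) with (- (2 * be * Y ^ 3 / 3) / M) by (field; lra) |];
    apply Rdiv_le_M; lra.
Qed.

Lemma potential_odd y : - Y <= y <= Y -> potential (- y) = - potential y.
Proof. intros. rewrite !potential_mid by lra. unfold band_cubic. field. lra. Qed.

Lemma potential_eq_high_inv y : potential y = al / 2 -> Y <= y.
Proof.
  intros H. apply Rnot_lt_le. intros Hy. pose proof calibrated_al_pos.
  destruct (Rle_dec y (- Y)); [rewrite potential_low in H; lra |].
  rewrite potential_mid, half_al in H by lra. unfold Rdiv in H.
  apply Rmult_eq_reg_r in H; [| apply Rinv_neq_0_compat; lra].
  unfold band_cubic in H. assert (0 < be * ((Y - y) * (Y - y) * (2 * Y + y))) by (apply Rmult_lt_0_compat; [| apply Rmult_lt_0_compat]; nra).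
  nra.
Qed.

Lemma potential_eq_low_inv y : potential y = - (al / 2) -> y <= - Y.
Proof.
  intros H. apply Rnot_lt_le. intros Hy. pose proof calibrated_al_pos.
  destruct (Rle_dec Y y); [rewrite potential_high in H; lra |].
  rewrite potential_mid, half_al in H by lra.
  replace (- (2 * be * Y ^ 3 / 3 / M)) with (- (2 * be * Y ^ 3 / 3) * / M) in H by (field; lra).
  unfold Rdiv in H. apply Rmult_eq_reg_r in H; [| apply Rinv_neq_0_compat; lra].
  unfold band_cubic in H. assert (0 < be * ((Y + y) * (Y + y) * (2 * Y - y))) by (apply Rmult_lt_0_compat; [| apply Rmult_lt_0_compat]; nra).
  nra.
Qed.

Lemma half_al_sub_potential y : 0 <= y <= Y -> al / 2 - potential y <= be * Y * (Y - y) ^ 2 / M.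
Proof.
  intros Hy. rewrite potential_mid, half_al by lra.
  replace (2 * be * Y ^ 3 / 3 / M - - band_cubic y / M) with ((2 * be * Y ^ 3 / 3 + band_cubic y) / M)
    by (field; lra).
  apply Rdiv_le_M. unfold band_cubic.
  assert (0 <= be * (Y - y) ^ 2) by (apply Rmult_le_pos; [lra | apply pow2_ge_0]). nra.
Qed.

Lemma excess_mid y : - Y <= y <= Y -> excess y = 0.
Proof. intros. unfold excess. rewrite clamp_mid by assumption. ring. Qed.

Lemma excess_high y : Y <= y -> excess y = band_cubic y - band_cubic Y.
Proof. intros. unfold excess. now rewrite clamp_high. Qed.

Lemma excess_low y : y <= - Y -> excess y = band_cubic y - band_cubic (- Y).
Proof. intros. unfold excess. now rewrite clamp_low. Qed.

Lemma excess_nonneg y : - Y <= y -> 0 <= excess y.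
Proof.
  intros. destruct (Rle_dec y Y); [rewrite excess_mid; lra |].
  rewrite excess_high by lra. pose proof (band_cubic_le_out y Y ltac:(lra) ltac:(lra)). lra.
Qed.

Lemma excess_nonpos y : y <= Y -> excess y <= 0.
Proof.
  intros. destruct (Rle_dec (- Y) y); [rewrite excess_mid; lra |].
  rewrite excess_low by lra. pose proof (band_cubic_le_out (- Y) y ltac:(lra) ltac:(lra)). lra.
Qed.

Lemma excess_mono y y' : y' <= y -> excess y' <= excess y.
Proof.
  intros H. destruct (Rle_dec y' Y), (Rle_dec (- Y) y).
  - pose proof (excess_nonpos y' ltac:(lra)); pose proof (excess_nonneg y ltac:(lra)); lra.
  - rewrite !excess_low by lra. pose proof (band_cubic_le_out y y' H ltac:(lra)). lra.
  - rewrite !excess_high by lra. pose proof (band_cubic_le_out y y' H ltac:(lra)). lra.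
  - lra.
Qed.

Lemma excess_eq_inv y y' : y' < y -> excess y' = excess y -> - Y <= y' /\ y <= Y.
Proof.
  intros H E. split; apply Rnot_lt_le; intros Hout.
  - destruct (Rle_dec y (- Y)).
    + rewrite !excess_low in E by lra. pose proof (band_cubic_lt_out y y' H ltac:(lra)). lra.
    + pose proof (excess_nonneg y ltac:(lra)). rewrite (excess_low y') in E by lra.
      pose proof (band_cubic_lt_out (- Y) y' Hout ltac:(lra)). lra.
  - destruct (Rle_dec Y y').
    + rewrite !excess_high in E by lra. pose proof (band_cubic_lt_out y y' H ltac:(lra)). lra.
    + pose proof (excess_nonpos y' ltac:(lra)). rewrite (excess_high y) in E by lra.
      pose proof (band_cubic_lt_out y Y Hout ltac:(lra)). lra.
Qed.

Lemma excess_sub_ge_high eta y y' : 0 < eta -> Y + eta <= y' -> y' <= y ->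
  be * ((Y + eta) ^ 2 - Y ^ 2) * (y - y') <= excess y - excess y'.
Proof.
  intros He H1 H2. rewrite !excess_high by lra.
  replace (band_cubic y - band_cubic Y - (band_cubic y' - band_cubic Y)) with (band_cubic y - band_cubic y') by ring.
  rewrite band_cubic_sub, Rmult_comm. apply Rmult_le_compat_l; [lra |]. apply Rmult_le_compat_l; [lra |]. nra.
Qed.

Lemma excess_sub_ge_low eta y y' : 0 < eta -> y <= - Y - eta -> y' <= y ->
  be * ((Y + eta) ^ 2 - Y ^ 2) * (y - y') <= excess y - excess y'.
Proof.
  intros He H1 H2. rewrite !excess_low by lra.
  replace (band_cubic y - band_cubic (- Y) - (band_cubic y' - band_cubic (- Y))) with (band_cubic y - band_cubic y') by ring.
  rewrite band_cubic_sub, Rmult_comm. apply Rmult_le_compat_l; [lra |]. apply Rmult_le_compat_l; [lra |]. nra.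
Qed.

Lemma excess_sub_le B y y' : y' <= y -> Rabs y <= B -> Rabs y' <= B ->
  excess y - excess y' <= be * (B ^ 2 + Y ^ 2) * (y - y').
Proof.
  intros H Hy Hy'. apply Rabs_le_between in Hy. apply Rabs_le_between in Hy'. unfold excess.
  pose proof (band_cubic_sub y y'). pose proof (band_cubic_sub (clamp y) (clamp y')).
  pose proof (clamp_lipschitz y y' H).
  assert (- Y <= clamp y <= Y) by (destruct (clamp_cases y) as [[? ->]|[[? ->]|[? ->]]]; lra).
  assert (- Y <= clamp y' <= Y) by (destruct (clamp_cases y') as [[? ->]|[[? ->]|[? ->]]]; lra).
  set (s := clamp y) in *; set (t := clamp y') in *.
  assert ((y - y') * (be * ((y ^ 2 + y * y' + y' ^ 2) / 3 - Y ^ 2)) <= (y - y') * (be * B ^ 2)).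
  { apply Rmult_le_compat_l; [lra |]. apply Rmult_le_compat_l; [lra |]. nra. }
  assert (- ((y - y') * (be * Y ^ 2)) <= (s - t) * (be * ((s ^ 2 + s * t + t ^ 2) / 3 - Y ^ 2))).
  { assert (0 <= s ^ 2 + s * t + t ^ 2) by nra.
    assert ((s - t) * (be * Y ^ 2) <= (y - y') * (be * Y ^ 2)) by (apply Rmult_le_compat_r; nra).
    assert (0 <= (s - t) * (be * ((s ^ 2 + s * t + t ^ 2) / 3))) by (apply Rmult_le_pos; nra).
    nra. }
  nra.
Qed.

Lemma deficit_const u a b c : a < b -> const_on u a b c -> deficit u a b c c = piece_deficit a b c.
Proof.
  intros Hab H. unfold deficit. rewrite (energy_const al be M u a b c Hab H).
  unfold calibration, piece_deficit, excess, potential, bulk_const, band_cubic. field. lra.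
Qed.

Lemma piece_deficit_ge0 s t c : s < t -> 0 <= piece_deficit s t c.
Proof.
  intros. unfold piece_deficit. apply Rdiv_le_0_compat; [| lra].
  pose proof (excess_mono (c - M * s) (c - M * t) ltac:(nra)). lra.
Qed.

Lemma deficit_split u a p b c0 c1 c c' : a < p < b -> is_step a b u ->
  left_trace u p c -> right_trace u p c' ->
  deficit u a b c0 c1 = deficit u a p c0 c + jump_deficit p c c' + deficit u p b c' c1.
Proof.
  intros Hp Hs HL HR. unfold deficit, jump_deficit.
  rewrite (energy_split al be M u a p b c c' Hp Hs HL HR). unfold calibration. ring.
Qed.

Lemma jump_deficit_ge0 p c c' : 0 <= jump_deficit p c c'.
Proof.
  unfold jump_deficit, jump_ind. destruct (Req_EM_T c c') as [-> | _]; simpl; [lra |].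
  pose proof (potential_bound (c' - M * p)). pose proof (potential_bound (c - M * p)). lra.
Qed.

Lemma jump_deficit_le p c c' : jump_deficit p c c' <= al - (potential (c' - M * p) - potential (c - M * p)).
Proof.
  unfold jump_deficit, jump_ind. pose proof calibrated_al_pos. destruct (Req_EM_T c c'); simpl; lra.
Qed.

Lemma jump_deficit_eq0_inv p c c' : jump_deficit p c c' = 0 -> c <> c' -> c - M * p <= - Y /\ Y <= c' - M * p.
Proof.
  unfold jump_deficit, jump_ind. intros H Hne. destruct (Req_EM_T c c') as [| _]; [contradiction |].
  simpl in H. pose proof (potential_bound (c' - M * p)). pose proof (potential_bound (c - M * p)).
  split; [apply potential_eq_low_inv | apply potential_eq_high_inv]; lra.
Qed.

(* Jump deficits are nonnegative, so lower bounds on the constancy pieces add up. *)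
Lemma deficit_ge_pieces u g :
  forall a b, a < b -> is_step a b u ->
  (forall s t c, a <= s -> s < t -> t <= b -> const_on u s t c -> g * (t - s) <= piece_deficit s t c) ->
  forall c0 c1, right_trace u a c0 -> left_trace u b c1 -> g * (b - a) <= deficit u a b c0 c1.
Proof.
  apply (is_step_ind u (fun a b => (forall s t c, a <= s -> s < t -> t <= b -> const_on u s t c ->
            g * (t - s) <= piece_deficit s t c) ->
          forall c0 c1, right_trace u a c0 -> left_trace u b c1 -> g * (b - a) <= deficit u a b c0 c1)).
  - intros a b c Hab H Hpiece c0 c1 H0 H1.
    destruct (const_on_traces u a b c c0 c1 Hab H H0 H1) as [-> ->].
    rewrite deficit_const by assumption. apply Hpiece; auto; lra.
  - intros a p b Hp S1 S2 IH1 IH2 Hpiece c0 c1 H0 H1.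
    destruct (is_step_left_trace a p u p S1) as [c Hc]; [lra |].
    destruct (is_step_right_trace p b u p S2) as [c' Hc']; [lra |].
    rewrite (deficit_split u a p b c0 c1 c c' Hp (is_step_glue a p b u Hp S1 S2) Hc Hc').
    pose proof (IH1 ltac:(intros; apply Hpiece; auto; lra) c0 c H0 Hc).
    pose proof (IH2 ltac:(intros; apply Hpiece; auto; lra) c' c1 Hc' H1).
    pose proof (jump_deficit_ge0 p c c'). lra.
Qed.

Lemma deficit_ge0 u a b c0 c1 : a < b -> is_step a b u ->
  right_trace u a c0 -> left_trace u b c1 -> 0 <= deficit u a b c0 c1.
Proof.
  intros Hab Hs H0 H1. rewrite <- (Rmult_0_l (b - a)).
  apply (deficit_ge_pieces u 0 a b Hab Hs); [| exact H0 | exact H1].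
  intros s t c _ Hst _ _. rewrite Rmult_0_l. now apply piece_deficit_ge0.
Qed.

Definition traces_in_band (v : R -> R) : Prop :=
  forall p c, right_trace v p c \/ left_trace v p c -> Rabs (c - M * p) <= Y.

Lemma deficit_eq0_of_band v : traces_in_band v -> jumps_of_size (2 * Y) v ->
  forall a b, a < b -> is_step a b v ->
  forall c0 c1, right_trace v a c0 -> left_trace v b c1 -> deficit v a b c0 c1 = 0.
Proof.
  intros Hband Hjumps.
  apply (is_step_ind v (fun a b => forall c0 c1, right_trace v a c0 -> left_trace v b c1 -> deficit v a b c0 c1 = 0)).
  - intros a b c Hab H c0 c1 H0 H1.
    destruct (const_on_traces v a b c c0 c1 Hab H H0 H1) as [-> ->].
    rewrite deficit_const by assumption. unfold piece_deficit.
    pose proof (Hband a c (or_introl H0)) as Ba. pose proof (Hband b c (or_intror H1)) as Bb.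
    apply Rabs_le_between in Ba, Bb. rewrite !excess_mid by lra. unfold Rdiv; ring.
  - intros a p b Hp S1 S2 IH1 IH2 c0 c1 H0 H1.
    destruct (is_step_left_trace a p v p S1) as [c Hc]; [lra |].
    destruct (is_step_right_trace p b v p S2) as [c' Hc']; [lra |].
    rewrite (deficit_split v a p b c0 c1 c c' Hp (is_step_glue a p b v Hp S1 S2) Hc Hc').
    rewrite (IH1 c0 c H0 Hc), (IH2 c' c1 Hc' H1).
    enough (jump_deficit p c c' = 0) by lra.
    unfold jump_deficit, jump_ind. destruct (Req_EM_T c c') as [-> | Hne]; [simpl; ring |].
    pose proof (Hjumps p c c' Hc Hc' Hne).
    pose proof (Hband p c (or_intror Hc)) as Bc. pose proof (Hband p c' (or_introl Hc')) as Bc'.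
    apply Rabs_le_between in Bc, Bc'.
    rewrite potential_high, potential_low by lra. simpl; lra.
Qed.

Lemma minimizer_of_band v : S_loc v -> traces_in_band v -> jumps_of_size (2 * Y) v ->
  entire_local_minimizer al be (fun x => M * x) v.
Proof.
  intros Hv Hband Hjumps. split; [exact Hv |]. intros a b Hab. split; [now apply Hv |].
  intros u Hu Htr n m Hn Hm. pose proof (Hv a b Hab) as Hva.
  rewrite (G_with_energy al be M v a b n Hab Hva Hn), (G_with_energy al be M u a b m Hab Hu Hm).
  destruct (is_step_right_trace a b v a Hva) as [c0 H0]; [lra |].
  destruct (is_step_left_trace a b v b Hva) as [c1 H1]; [lra |].
  pose proof (deficit_eq0_of_band v Hband Hjumps a b Hab Hva c0 c1 H0 H1).
  pose proof (deficit_ge0 u a b c0 c1 Hab Hu (right_trace_same_traces a b u v c0 Hab Htr H0)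
                (left_trace_same_traces a b u v c1 Hab Htr H1)).
  unfold deficit in *. lra.
Qed.

Section FineStair.

Variables (c0 c1 p1 l : R) (m : nat).
Hypothesis l_pos : 0 < l.
Hypothesis l_small : M * l / 2 <= Y.

Let q := p1 + INR (S m) * l.

(* [m + 1] steps of width [l] on [(p1, q)], the j-th one at the height of [M x] at its midpoint. *)
Definition fine_stair (x : R) : R :=
  if Rlt_dec x p1 then c0
  else if Rlt_dec x q then M * (p1 + l * (IZR (floor ((x - p1) / l)) + / 2)) else c1.

Definition stair_value (j : nat) : R := M * (p1 + l * (INR j + / 2)).

Lemma fine_stair_step j : (j <= m)%nat ->
  const_on fine_stair (p1 + INR j * l) (p1 + INR (S j) * l) (stair_value j).
Proof.
  intros Hj x Hx. rewrite S_INR in Hx. unfold fine_stair, stair_value.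
  assert (INR j + 1 <= INR m + 1) by (apply Rplus_le_compat_r, le_INR; lia).
  pose proof (pos_INR j).
  destruct (Rlt_dec x p1); [nra |]. destruct (Rlt_dec x q) as [_ | Hq]; [| unfold q in Hq; rewrite S_INR in Hq; nra].
  rewrite (floor_eq (Z.of_nat j)), <- INR_IZR_INZ; [reflexivity |].
  rewrite <- INR_IZR_INZ. split; [apply Rle_div_r | apply Rlt_div_l]; lra.
Qed.

Lemma fine_stair_step_deficit j : (j <= m)%nat ->
  deficit fine_stair (p1 + INR j * l) (p1 + INR (S j) * l) (stair_value j) (stair_value j) = 0.
Proof.
  intros Hj. rewrite deficit_const; [| rewrite S_INR; lra | now apply fine_stair_step].
  unfold piece_deficit, stair_value. rewrite S_INR, !excess_mid; [unfold Rdiv; ring | |]; split; nra.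
Qed.

Let inner_jump := al - (potential (M * l / 2) - potential (- (M * l / 2))).

Lemma fine_stair_inner k : (k <= m)%nat ->
  is_step p1 (p1 + INR (S k) * l) fine_stair /\
  deficit fine_stair p1 (p1 + INR (S k) * l) (stair_value 0) (stair_value k) = INR k * inner_jump.
Proof.
  induction k as [| k IH]; intros Hk.
  - pose proof (fine_stair_step 0 (Nat.le_0_l m)) as H0. pose proof (fine_stair_step_deficit 0 (Nat.le_0_l m)) as D0.
    simpl INR in *. rewrite Rmult_0_l, Rplus_0_r in H0, D0.
    split; [exact (is_step_const _ _ _ _ H0) | rewrite D0; ring].
  - destruct (IH ltac:(lia)) as [S1 E1].
    set (p := p1 + INR (S k) * l) in *.
    assert (Hp : p1 < p < p1 + INR (S (S k)) * l) by (unfold p; rewrite !S_INR; pose proof (pos_INR k); nra).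
    pose proof (fine_stair_step (S k) Hk) as Hstep.
    assert (S2 : is_step p (p1 + INR (S (S k)) * l) fine_stair) by exact (is_step_const _ _ _ _ Hstep).
    assert (S12 := is_step_glue _ _ _ _ Hp S1 S2). split; [exact S12 |].
    rewrite (deficit_split _ _ p _ _ _ (stair_value k) (stair_value (S k)) Hp S12).
    + pose proof (fine_stair_step_deficit (S k) Hk) as Dk. fold p in Dk. rewrite E1, Dk.
      replace (jump_deficit p (stair_value k) (stair_value (S k))) with inner_jump; [rewrite S_INR; ring |].
      unfold jump_deficit, jump_ind, inner_jump, stair_value, p. rewrite !S_INR.
      destruct (Req_EM_T _ _) as [E | _]; [nra |]. simpl.
      f_equal; [ring |]. f_equal; f_equal; field.
    + apply (left_trace_of_const _ (p1 + INR k * l) p); [apply fine_stair_step; lia | unfold p; rewrite S_INR; lra].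
    + apply (right_trace_of_const _ p (p1 + INR (S (S k)) * l)); [exact Hstep | lra].
Qed.

Variables a b : R.
Hypothesis a_lt : a < p1.
Hypothesis b_gt : q < b.

Lemma p1_lt_q : p1 < q.
Proof. unfold q. rewrite S_INR. pose proof (pos_INR m). nra. Qed.

Lemma fine_stair_left : const_on fine_stair a p1 c0.
Proof. intros x Hx. unfold fine_stair. destruct (Rlt_dec x p1); [reflexivity | lra]. Qed.

Lemma fine_stair_right : const_on fine_stair q b c1.
Proof.
  pose proof p1_lt_q. intros x Hx. unfold fine_stair.
  destruct (Rlt_dec x p1); [lra |]. destruct (Rlt_dec x q); [lra | reflexivity].
Qed.

Lemma fine_stair_is_step : is_step a b fine_stair.
Proof.
  pose proof p1_lt_q.
  apply (is_step_glue _ p1); [lra | exact (is_step_const _ _ _ _ fine_stair_left) |].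
  apply (is_step_glue _ q); [lra | exact (proj1 (fine_stair_inner m (le_n m))) |].
  exact (is_step_const _ _ _ _ fine_stair_right).
Qed.

Lemma fine_stair_deficit :
  deficit fine_stair a b c0 c1 =
  piece_deficit a p1 c0 + jump_deficit p1 c0 (stair_value 0) + INR m * inner_jump
  + jump_deficit q (stair_value m) c1 + piece_deficit q b c1.
Proof.
  pose proof p1_lt_q as Hpq. destruct (fine_stair_inner m (le_n m)) as [Sm Em].
  assert (Sqb := is_step_const _ _ _ _ fine_stair_right).
  rewrite (deficit_split _ a p1 b c0 c1 c0 (stair_value 0)); [| lra | exact fine_stair_is_step
      | apply (left_trace_of_const _ a p1); [exact fine_stair_left | lra]
      | apply (right_trace_of_const _ p1 (p1 + INR 1 * l)); [| simpl; lra];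
        replace p1 with (p1 + INR 0 * l) at 1 by (simpl; ring); apply fine_stair_step; lia].
  rewrite (deficit_split _ p1 q b (stair_value 0) c1 (stair_value m) c1); [| lra
      | apply (is_step_glue _ q); [lra | exact Sm | exact Sqb]
      | apply (left_trace_of_const _ (p1 + INR m * l) q); [apply fine_stair_step; lia | unfold q; rewrite S_INR; lra]
      | apply (right_trace_of_const _ q b); [exact fine_stair_right | lra]].
  rewrite (deficit_const _ a p1 c0), (deficit_const _ q b c1); [| lra | exact fine_stair_right | lra | exact fine_stair_left].
  unfold q in *. rewrite Em. ring.
Qed.

Lemma fine_stair_deficit_le :
  deficit fine_stair a b c0 c1 <=
  piece_deficit a p1 c0 + piece_deficit q b c1 + (al / 2 + potential (c0 - M * p1))
  + (al / 2 - potential (c1 - M * q)) + 2 * INR (S m) * (be * Y * (Y - M * l / 2) ^ 2 / M).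
Proof.
  rewrite fine_stair_deficit.
  pose proof (jump_deficit_le p1 c0 (stair_value 0)) as J1.
  pose proof (jump_deficit_le q (stair_value m) c1) as J2.
  replace (stair_value 0 - M * p1) with (M * l / 2) in J1 by (unfold stair_value; simpl; field).
  replace (stair_value m - M * q) with (- (M * l / 2)) in J2 by (unfold stair_value, q; rewrite S_INR; field).
  assert (Hl2 : 0 <= M * l / 2 <= Y) by (split; [nra | lra]).
  unfold inner_jump. rewrite potential_odd in J2 |- * by lra.
  pose proof (half_al_sub_potential (M * l / 2) Hl2) as Hgap.
  pose proof (potential_bound (M * l / 2)). pose proof (pos_INR m).
  assert (INR m * (al / 2 - potential (M * l / 2)) <= INR m * (be * Y * (Y - M * l / 2) ^ 2 / M))
    by (apply Rmult_le_compat_l; lra).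
  rewrite S_INR. lra.
Qed.

End FineStair.

Definition stair_error (D : R) : R := 2 * be * Y ^ 3 / (M * Rmax 1 (D * M / (2 * Y))).

Lemma stair_competitor a p1 q b c0 c1 : a < p1 -> p1 < q -> q < b ->
  exists u, is_step a b u /\ right_trace u a c0 /\ left_trace u b c1 /\
  deficit u a b c0 c1 <= piece_deficit a p1 c0 + piece_deficit q b c1
    + (al / 2 + potential (c0 - M * p1)) + (al / 2 - potential (c1 - M * q)) + stair_error (q - p1).
Proof.
  intros Ha Hpq Hb. set (z := (q - p1) * M / (2 * Y)).
  assert (Hz : 0 < z) by (unfold z; apply Rdiv_lt_0_compat; nra).
  destruct (floor_spec z) as [F1 F2].
  assert (F0 : (0 <= floor z)%Z).
  { assert (IZR (-1) < IZR (floor z)) by (simpl; lra). apply lt_IZR in H. lia. }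
  set (m := Z.to_nat (floor z)).
  assert (Hn : INR (S m) = IZR (floor z) + 1) by (unfold m; rewrite S_INR, INR_IZR_INZ, Z2Nat.id; auto).
  set (n := INR (S m)) in *. set (l := (q - p1) / n).
  assert (Hn1 : 1 <= n) by (apply IZR_le in F0; lra).
  assert (Hl : 0 < l) by (apply Rdiv_lt_0_compat; lra).
  assert (Eq : p1 + n * l = q) by (unfold l; field; lra).
  assert (El : M * l / 2 = Y * (z / n)) by (unfold l, z; field; lra).
  assert (Hzn : 0 < z / n <= 1) by (split; [apply Rdiv_lt_0_compat | apply Rle_div_l]; lra).
  assert (Hsmall : M * l / 2 <= Y) by (rewrite El; nra).
  pose proof (fine_stair_deficit_le c0 c1 p1 l m Hl Hsmall a b Ha ltac:(fold n; lra)) as B.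
  exists (fine_stair c0 c1 p1 l m). fold n in B |- *. rewrite Eq in B.
  split; [apply fine_stair_is_step; auto; fold n; lra |].
  split; [apply (right_trace_of_const _ a p1); [apply fine_stair_left | lra] |].
  split; [apply (left_trace_of_const _ q b); [rewrite <- Eq; apply fine_stair_right; exact Hl | lra] |].
  enough (2 * n * (be * Y * (Y - M * l / 2) ^ 2 / M) <= stair_error (q - p1)) by lra.
  rewrite El. unfold stair_error. fold z.
  assert (Hmax : Rmax 1 z <= n) by (apply Rmax_lub; lra).
  assert (Hmax0 : 0 < Rmax 1 z) by (pose proof (Rmax_l 1 z); lra).
  apply Rle_trans with (2 * be * Y ^ 3 / (M * n)).
  - replace (2 * n * (be * Y * (Y - Y * (z / n)) ^ 2 / M)) with (2 * be * Y ^ 3 / (M * n) * (n - z) ^ 2)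
      by (field; lra).
    pose proof (pow_lt Y 3 Y_pos). assert (0 < 2 * be * Y ^ 3 / (M * n)) by (apply Rdiv_lt_0_compat; nra).
    assert ((n - z) ^ 2 <= 1) by nra. nra.
  - unfold Rdiv. apply Rmult_le_compat_l; [pose proof (pow_lt Y 3 Y_pos); nra |].
    apply Rinv_le_contravar; nra.
Qed.

Lemma stair_error_le D : stair_error D <= 3 / 2 * al.
Proof.
  unfold stair_error. rewrite al_eq. pose proof (Rmax_l 1 (D * M / (2 * Y))).
  pose proof (pow_lt Y 3 Y_pos).
  replace (3 / 2 * (4 * be * Y ^ 3 / (3 * M))) with (2 * be * Y ^ 3 / (M * 1)) by (field; lra).
  unfold Rdiv. apply Rmult_le_compat_l; [nra |]. apply Rinv_le_contravar; nra.
Qed.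

Lemma stair_error_lt d D : 0 < d -> 4 * be * Y ^ 4 / (M ^ 2 * d) < D -> stair_error D < d.
Proof.
  intros Hd HD. pose proof (pow_lt Y 3 Y_pos). pose proof (pow_lt Y 4 Y_pos). pose proof (pow_lt M 2 M_pos).
  assert (HD0 : 0 < D).
  { eapply Rlt_trans; [| exact HD]. apply Rdiv_lt_0_compat; apply Rmult_lt_0_compat; lra. }
  set (z := D * M / (2 * Y)). assert (Hz : 0 < z) by (unfold z; apply Rdiv_lt_0_compat; nra).
  unfold stair_error. fold z. apply Rle_lt_trans with (2 * be * Y ^ 3 / (M * z)).
  - unfold Rdiv. apply Rmult_le_compat_l; [nra |]. apply Rinv_le_contravar; [nra |].
    apply Rmult_le_compat_l; [lra | apply Rmax_r].
  - replace (2 * be * Y ^ 3 / (M * z)) with (4 * be * Y ^ 4 / (M ^ 2 * D)) by (unfold z; field; lra).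
    apply Rlt_div_l in HD; [| nra]. apply Rlt_div_l; nra.
Qed.

Lemma piece_deficit_small_left a c t : 0 < t ->
  exists e0, 0 < e0 /\ forall e, 0 < e <= e0 -> piece_deficit a (a + e) c <= t.
Proof.
  intros Ht. set (B := Rabs (c - M * a) + M). set (K := be * (B ^ 2 + Y ^ 2)).
  assert (HK : 0 < K) by (unfold K; pose proof (pow2_ge_0 B); pose proof (pow_lt Y 2 Y_pos); nra).
  exists (Rmin 1 (t / K)). split; [apply Rmin_pos; [lra | apply Rdiv_lt_0_compat; lra] |].
  intros e He. pose proof (Rmin_l 1 (t / K)). pose proof (Rmin_r 1 (t / K)).
  assert (HeK : e * K <= t) by (apply Rle_div_r; lra).
  assert (Me : 0 <= M * e <= M) by (split; [nra | rewrite <- (Rmult_1_r M) at 2; apply Rmult_le_compat_l; lra]).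
  assert (Hy : Rabs (c - M * (a + e)) <= B).
  { unfold B. replace (c - M * (a + e)) with ((c - M * a) + - (M * e)) by ring.
    eapply Rle_trans; [apply Rabs_triang |]. rewrite Rabs_Ropp, (Rabs_right (M * e)) by lra. lra. }
  pose proof (excess_sub_le B (c - M * a) (c - M * (a + e)) ltac:(nra) ltac:(unfold B; lra) Hy) as Hex.
  fold K in Hex. unfold piece_deficit. apply Rle_div_l; [lra |]. nra.
Qed.

Lemma piece_deficit_small_right b c t : 0 < t ->
  exists e0, 0 < e0 /\ forall e, 0 < e <= e0 -> piece_deficit (b - e) b c <= t.
Proof.
  intros Ht. set (B := Rabs (c - M * b) + M). set (K := be * (B ^ 2 + Y ^ 2)).
  assert (HK : 0 < K) by (unfold K; pose proof (pow2_ge_0 B); pose proof (pow_lt Y 2 Y_pos); nra).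
  exists (Rmin 1 (t / K)). split; [apply Rmin_pos; [lra | apply Rdiv_lt_0_compat; lra] |].
  intros e He. pose proof (Rmin_l 1 (t / K)). pose proof (Rmin_r 1 (t / K)).
  assert (HeK : e * K <= t) by (apply Rle_div_r; lra).
  assert (Me : 0 <= M * e <= M) by (split; [nra | rewrite <- (Rmult_1_r M) at 2; apply Rmult_le_compat_l; lra]).
  assert (Hy : Rabs (c - M * (b - e)) <= B).
  { unfold B. replace (c - M * (b - e)) with ((c - M * b) + M * e) by ring.
    eapply Rle_trans; [apply Rabs_triang |]. rewrite (Rabs_right (M * e)) by lra. lra. }
  pose proof (excess_sub_le B (c - M * (b - e)) (c - M * b) ltac:(nra) Hy ltac:(unfold B; lra)) as Hex.
  fold K in Hex. unfold piece_deficit. apply Rle_div_l; [lra |]. nra.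
Qed.

Lemma deficit_bounded_competitor a b c0 c1 : a < b ->
  exists u, is_step a b u /\ right_trace u a c0 /\ left_trace u b c1 /\ deficit u a b c0 c1 <= 1 + 4 * al.
Proof.
  intros Hab.
  destruct (piece_deficit_small_left a c0 (1 / 2) ltac:(lra)) as [e1 [He1 P1]].
  destruct (piece_deficit_small_right b c1 (1 / 2) ltac:(lra)) as [e2 [He2 P2]].
  Rmin_facts e1 ((b - a) / 3); Rmin_facts e2 ((b - a) / 3).
  set (f1 := Rmin e1 ((b - a) / 3)) in *. set (f2 := Rmin e2 ((b - a) / 3)) in *.
  assert (0 < f1) by (apply Rmin_pos; lra). assert (0 < f2) by (apply Rmin_pos; lra).
  destruct (stair_competitor a (a + f1) (b - f2) b c0 c1) as [u [Hu [U0 [U1 Hd]]]]; try lra.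
  exists u. repeat split; auto.
  pose proof (P1 f1 ltac:(lra)). pose proof (P2 f2 ltac:(lra)).
  pose proof (potential_bound (c0 - M * (a + f1))). pose proof (potential_bound (c1 - M * (b - f2))).
  pose proof (stair_error_le (b - f2 - (a + f1))). pose proof calibrated_al_pos. lra.
Qed.

Lemma excess_above_band_small d : 0 < d -> exists eta, 0 < eta /\ excess (Y + eta) / M <= d.
Proof.
  intros Hd. set (eta := Rmin Y (3 * d * M / (4 * be * Y ^ 2))).
  pose proof (pow_lt Y 2 Y_pos).
  assert (Heta0 : 0 < 3 * d * M / (4 * be * Y ^ 2)) by (apply Rdiv_lt_0_compat; nra).
  assert (0 < eta) by (apply Rmin_pos; lra).
  pose proof (Rmin_l Y (3 * d * M / (4 * be * Y ^ 2))). pose proof (Rmin_r Y (3 * d * M / (4 * be * Y ^ 2))).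
  fold eta in H1, H2. apply Rle_div_r in H2; [| nra].
  exists eta; split; [assumption |].
  rewrite excess_high by lra. apply Rle_div_l; [lra |]. unfold band_cubic.
  assert (be * eta ^ 2 * (eta + 3 * Y) / 3 <= 4 / 3 * be * Y ^ 2 * eta).
  { assert (eta ^ 2 <= Y * eta) by nra.
    assert (0 <= be * eta ^ 2) by (apply Rmult_le_pos; [lra | apply pow2_ge_0]).
    assert (be * eta ^ 2 * (eta + 3 * Y) <= be * eta ^ 2 * (4 * Y)) by (apply Rmult_le_compat_l; lra).
    assert (be * eta ^ 2 <= be * (Y * eta)) by (apply Rmult_le_compat_l; lra).
    assert (be * eta ^ 2 * (4 * Y) <= be * (Y * eta) * (4 * Y)) by (apply Rmult_le_compat_r; lra).
    lra. }
  nra.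
Qed.

Lemma band_entry_left a c0 eta d : 0 < eta -> 0 < d -> excess (Y + eta) / M <= d -> c0 - M * a <= Y + eta ->
  exists p, a < p <= a + (1 + (2 * Y + eta) / M) /\ potential (c0 - M * p) = - (al / 2) /\
            piece_deficit a p c0 <= d.
Proof.
  intros He Hd Hex Hc. assert (0 < (2 * Y + eta) / M) by (apply Rdiv_lt_0_compat; lra).
  destruct (Rle_dec (c0 - M * a) (- Y)).
  - destruct (piece_deficit_small_left a c0 d Hd) as [e0 [He0 P]].
    Rmin_facts e0 1. exists (a + Rmin e0 1).
    assert (0 < Rmin e0 1) by (apply Rmin_pos; lra).
    split; [lra | split; [apply potential_low; nra | apply P; lra]].
  - set (p := a + (c0 - M * a + Y) / M).
    assert (E : c0 - M * p = - Y) by (unfold p; field; lra).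
    assert (0 < (c0 - M * a + Y) / M) by (apply Rdiv_lt_0_compat; lra).
    assert ((c0 - M * a + Y) / M <= (2 * Y + eta) / M) by (apply Rdiv_le_M; lra).
    exists p. split; [unfold p; lra |].
    rewrite E. split; [apply potential_low; lra |].
    unfold piece_deficit. rewrite E, (excess_mid (- Y)), Rminus_0_r by lra.
    eapply Rle_trans; [| exact Hex]. apply Rdiv_le_M, excess_mono; lra.
Qed.

Lemma band_entry_right b c1 eta d : 0 < eta -> 0 < d -> excess (Y + eta) / M <= d -> - Y - eta <= c1 - M * b ->
  exists q, b - (1 + (2 * Y + eta) / M) <= q < b /\ potential (c1 - M * q) = al / 2 /\
            piece_deficit q b c1 <= d.
Proof.
  intros He Hd Hex Hc. assert (0 < (2 * Y + eta) / M) by (apply Rdiv_lt_0_compat; lra).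
  destruct (Rle_dec Y (c1 - M * b)).
  - destruct (piece_deficit_small_right b c1 d Hd) as [e0 [He0 P]].
    Rmin_facts e0 1. exists (b - Rmin e0 1).
    assert (0 < Rmin e0 1) by (apply Rmin_pos; lra).
    split; [lra | split; [apply potential_high; nra | apply P; lra]].
  - set (q := b - (Y - (c1 - M * b)) / M).
    assert (E : c1 - M * q = Y) by (unfold q; field; lra).
    assert (Hsym : excess (- Y - eta) = - excess (Y + eta)).
    { rewrite excess_low, excess_high by lra. unfold band_cubic. field. }
    assert (0 < (Y - (c1 - M * b)) / M) by (apply Rdiv_lt_0_compat; lra).
    assert ((Y - (c1 - M * b)) / M <= (2 * Y + eta) / M) by (apply Rdiv_le_M; lra).
    exists q. split; [unfold q; lra |].
    rewrite E. split; [apply potential_high; lra |].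
    unfold piece_deficit. rewrite E, (excess_mid Y) by lra.
    eapply Rle_trans; [| exact Hex]. apply Rdiv_le_M.
    pose proof (excess_mono (c1 - M * b) (- Y - eta) Hc). lra.
Qed.

(* Between two points near the band, a fine staircase with many small jumps makes the deficit
   arbitrarily small. *)
Lemma deficit_small_competitor d : 0 < d -> exists eta, 0 < eta /\ exists T, 0 < T /\
  forall a b c0 c1, T <= b - a -> c0 - M * a <= Y + eta -> - Y - eta <= c1 - M * b ->
  exists u, is_step a b u /\ right_trace u a c0 /\ left_trace u b c1 /\ deficit u a b c0 c1 < d.
Proof.
  intros Hd. destruct (excess_above_band_small (d / 4) ltac:(lra)) as [eta [He Hex]].
  exists eta; split; [assumption |].
  set (W := 1 + (2 * Y + eta) / M). assert (0 < (2 * Y + eta) / M) by (apply Rdiv_lt_0_compat; lra).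
  set (K := 4 * be * Y ^ 4 / (M ^ 2 * (d / 2))).
  assert (0 < K) by (unfold K; pose proof (pow_lt Y 4 Y_pos); pose proof (pow_lt M 2 M_pos);
                     apply Rdiv_lt_0_compat; apply Rmult_lt_0_compat; lra).
  exists (2 * W + K + 1). split; [unfold W; lra |].
  intros a b c0 c1 HT Hc0 Hc1.
  destruct (band_entry_left a c0 eta (d / 4) He ltac:(lra) Hex Hc0) as [p [Hp [G1 P1]]].
  destruct (band_entry_right b c1 eta (d / 4) He ltac:(lra) Hex Hc1) as [q [Hq [G2 P2]]].
  fold W in Hp, Hq.
  destruct (stair_competitor a p q b c0 c1) as [u [Hu [U0 [U1 Hdef]]]]; try lra.
  exists u. repeat split; auto. rewrite G1, G2 in Hdef.
  pose proof (stair_error_lt (d / 2) (q - p) ltac:(lra) ltac:(fold K; lra)). lra.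
Qed.

Lemma minimizer_deficit_le v u a b c0 c1 : entire_local_minimizer al be (fun x => M * x) v ->
  a < b -> is_step a b u -> right_trace u a c0 -> left_trace u b c1 ->
  right_trace v a c0 -> left_trace v b c1 -> deficit v a b c0 c1 <= deficit u a b c0 c1.
Proof.
  intros Hv Hab Hu U0 U1 V0 V1. unfold deficit.
  pose proof (minimizer_energy_le al be M v u a b c0 c1 Hv Hab Hu U0 U1 V0 V1). lra.
Qed.

Lemma deficit_ge_above_band v eta a b c0 c1 : 0 < eta -> a < b -> is_step a b v ->
  (forall x, a < x < b -> locally_const v x -> Y + eta <= v x - M * x) ->
  right_trace v a c0 -> left_trace v b c1 ->
  be * ((Y + eta) ^ 2 - Y ^ 2) * (b - a) <= deficit v a b c0 c1.
Proof.
  intros He Hab Hv Habove. apply (deficit_ge_pieces v _ a b Hab Hv).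
  intros s t c Has Hst Htb Hc.
  assert (Ht : Y + eta <= c - M * t).
  { apply (affine_ge_right_end M s); [lra | lra |]. intros x Hx. rewrite <- (Hc x Hx).
    apply Habove; [lra | exact (locally_const_of_const_on v s t c x Hc Hx)]. }
  pose proof (excess_sub_ge_high eta (c - M * s) (c - M * t) He Ht ltac:(nra)).
  unfold piece_deficit. apply (proj1 (Rle_div_r _ _ M ltac:(lra))).
  replace (c - M * s - (c - M * t)) with (M * (t - s)) in H by ring.
  replace (be * ((Y + eta) ^ 2 - Y ^ 2) * (t - s) * M) with (be * ((Y + eta) ^ 2 - Y ^ 2) * (M * (t - s))) by ring.
  exact H.
Qed.

Lemma deficit_ge_below_band v eta a b c0 c1 : 0 < eta -> a < b -> is_step a b v ->
  (forall x, a < x < b -> locally_const v x -> v x - M * x <= - Y - eta) ->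
  right_trace v a c0 -> left_trace v b c1 ->
  be * ((Y + eta) ^ 2 - Y ^ 2) * (b - a) <= deficit v a b c0 c1.
Proof.
  intros He Hab Hv Hbelow. apply (deficit_ge_pieces v _ a b Hab Hv).
  intros s t c Has Hst Htb Hc.
  assert (Hs : c - M * s <= - Y - eta).
  { apply (affine_le_left_end M s t); [lra | lra |]. intros x Hx. rewrite <- (Hc x Hx).
    apply Hbelow; [lra | exact (locally_const_of_const_on v s t c x Hc Hx)]. }
  pose proof (excess_sub_ge_low eta (c - M * s) (c - M * t) He Hs ltac:(nra)).
  unfold piece_deficit. apply (proj1 (Rle_div_r _ _ M ltac:(lra))).
  replace (c - M * s - (c - M * t)) with (M * (t - s)) in H by ring.
  replace (be * ((Y + eta) ^ 2 - Y ^ 2) * (t - s) * M) with (be * ((Y + eta) ^ 2 - Y ^ 2) * (M * (t - s))) by ring.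
  exact H.
Qed.

Section Minimizer.

Variable v : R -> R.
Hypothesis v_min : entire_local_minimizer al be (fun x => M * x) v.

Let v_step a b : a < b -> is_step a b v := proj1 v_min a b.

Let traces_at a b (Hab : a < b) : exists c0 c1, right_trace v a c0 /\ left_trace v b c1.
Proof.
  destruct (is_step_right_trace a b v a (v_step a b Hab)) as [c0 H0]; [lra |].
  destruct (is_step_left_trace a b v b (v_step a b Hab)) as [c1 H1]; [lra |].
  now exists c0, c1.
Qed.

(* Otherwise the deficit on a long interval would exceed that of a bounded competitor. *)
Lemma minimizer_near_band_left eta x0 : 0 < eta ->
  exists a, a < x0 /\ locally_const v a /\ v a - M * a <= Y + eta.
Proof.
  intros He. apply NNPP. intros Hn.
  set (g := be * ((Y + eta) ^ 2 - Y ^ 2)). assert (Hg : 0 < g) by (unfold g; apply Rmult_lt_0_compat; [lra | replace ((Y + eta) ^ 2 - Y ^ 2) with (eta * (2 * Y + eta)) by ring; apply Rmult_lt_0_compat; lra]).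
  set (T := (2 + 4 * al) / g). pose proof calibrated_al_pos.
  assert (HT : 0 < T) by (apply Rdiv_lt_0_compat; lra).
  destruct (traces_at (x0 - T) x0 ltac:(lra)) as [c0 [c1 [H0 H1]]].
  assert (LB : g * (x0 - (x0 - T)) <= deficit v (x0 - T) x0 c0 c1).
  { apply deficit_ge_above_band; auto; [lra | apply v_step; lra |].
    intros x Hx Hloc. apply Rnot_lt_le. intros Hlt. apply Hn. exists x. repeat split; auto; lra. }
  destruct (deficit_bounded_competitor (x0 - T) x0 c0 c1 ltac:(lra)) as [u [Hu [U0 [U1 Bu]]]].
  pose proof (minimizer_deficit_le v u (x0 - T) x0 c0 c1 v_min ltac:(lra) Hu U0 U1 H0 H1).
  replace (g * (x0 - (x0 - T))) with (2 + 4 * al) in LB by (unfold T; field; lra). lra.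
Qed.

Lemma minimizer_near_band_right eta x0 : 0 < eta ->
  exists b, x0 < b /\ locally_const v b /\ - Y - eta <= v b - M * b.
Proof.
  intros He. apply NNPP. intros Hn.
  set (g := be * ((Y + eta) ^ 2 - Y ^ 2)). assert (Hg : 0 < g) by (unfold g; apply Rmult_lt_0_compat; [lra | replace ((Y + eta) ^ 2 - Y ^ 2) with (eta * (2 * Y + eta)) by ring; apply Rmult_lt_0_compat; lra]).
  set (T := (2 + 4 * al) / g). pose proof calibrated_al_pos.
  assert (HT : 0 < T) by (apply Rdiv_lt_0_compat; lra).
  destruct (traces_at x0 (x0 + T) ltac:(lra)) as [c0 [c1 [H0 H1]]].
  assert (LB : g * (x0 + T - x0) <= deficit v x0 (x0 + T) c0 c1).
  { apply deficit_ge_below_band; auto; [lra | apply v_step; lra |].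
    intros x Hx Hloc. apply Rnot_lt_le. intros Hlt. apply Hn. exists x. repeat split; auto; lra. }
  destruct (deficit_bounded_competitor x0 (x0 + T) c0 c1 ltac:(lra)) as [u [Hu [U0 [U1 Bu]]]].
  pose proof (minimizer_deficit_le v u x0 (x0 + T) c0 c1 v_min ltac:(lra) Hu U0 U1 H0 H1).
  replace (g * (x0 + T - x0)) with (2 + 4 * al) in LB by (unfold T; field; lra). lra.
Qed.

(* A positive deficit on (a, b) persists on any larger interval, where it can be undercut. *)
Lemma minimizer_deficit_eq0 a b c0 c1 : a < b -> right_trace v a c0 -> left_trace v b c1 ->
  deficit v a b c0 c1 = 0.
Proof.
  intros Hab H0 H1. pose proof (deficit_ge0 v a b c0 c1 Hab (v_step a b Hab) H0 H1).
  apply Rle_antisym; [| assumption]. apply Rnot_lt_le. intros Hd.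
  destruct (deficit_small_competitor _ Hd) as [eta [He [T [HT Hsmall]]]].
  destruct (minimizer_near_band_left eta (a - T) He) as [a' [Ha' [La' Sa']]].
  destruct (minimizer_near_band_right eta b He) as [b' [Hb' [Lb' Sb']]].
  destruct (Hsmall a' b' (v a') (v b') ltac:(lra) Sa' Sb') as [u [Hu [U0 [U1 Bu]]]].
  pose proof (minimizer_deficit_le v u a' b' (v a') (v b') v_min ltac:(lra) Hu U0 U1
                (locally_const_right_trace v a' La') (locally_const_left_trace v b' Lb')) as Hcmp.
  destruct (is_step_left_trace a' b' v a (v_step a' b' ltac:(lra))) as [ca Ha]; [lra |].
  destruct (is_step_right_trace a' b' v b (v_step a' b' ltac:(lra))) as [cb Hb]; [lra |].
  rewrite (deficit_split v a' a b' _ _ ca c0 ltac:(lra) (v_step a' b' ltac:(lra)) Ha H0) in Hcmp.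
  rewrite (deficit_split v a b b' _ _ c1 cb ltac:(lra) (v_step a b' ltac:(lra)) H1 Hb) in Hcmp.
  pose proof (deficit_ge0 v a' a _ _ ltac:(lra) (v_step a' a ltac:(lra)) (locally_const_right_trace v a' La') Ha).
  pose proof (deficit_ge0 v b b' _ _ ltac:(lra) (v_step b b' ltac:(lra)) Hb (locally_const_left_trace v b' Lb')).
  pose proof (jump_deficit_ge0 a ca c0). pose proof (jump_deficit_ge0 b c1 cb). lra.
Qed.

Lemma minimizer_traces_in_band : traces_in_band v.
Proof.
  intros p c Hc.
  assert (Hpiece : forall s t, s < t -> const_on v s t c -> (s = p \/ t = p) -> Rabs (c - M * p) <= Y).
  { intros s t Hst Hconst Hp.
    pose proof (minimizer_deficit_eq0 s t c c Hst (right_trace_of_const v s t c s Hconst ltac:(lra))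
                  (left_trace_of_const v s t c t Hconst ltac:(lra))) as Z.
    rewrite deficit_const in Z by assumption. unfold piece_deficit in Z.
    assert (E : excess (c - M * t) = excess (c - M * s)).
    { apply Rmult_eq_reg_r with (/ M); [| apply Rinv_neq_0_compat; lra]. unfold Rdiv in Z. lra. }
    destruct (excess_eq_inv (c - M * s) (c - M * t) ltac:(nra) E).
    apply Rabs_le. destruct Hp as [-> | ->]; nra. }
  destruct Hc as [[e [He H]] | [e [He H]]].
  - apply (Hpiece p (p + e)); auto; lra.
  - apply (Hpiece (p - e) p); auto; lra.
Qed.

Lemma minimizer_jumps_of_size : jumps_of_size (2 * Y) v.
Proof.
  intros p c c' Hc Hc' Hne.
  pose proof (minimizer_traces_in_band p c (or_intror Hc)) as Bc.
  pose proof (minimizer_traces_in_band p c' (or_introl Hc')) as Bc'.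
  apply Rabs_le_between in Bc, Bc'.
  destruct (traces_at (p - 1) (p + 1) ltac:(lra)) as [c0 [c1 [H0 H1]]].
  pose proof (minimizer_deficit_eq0 (p - 1) (p + 1) c0 c1 ltac:(lra) H0 H1) as Z.
  rewrite (deficit_split v (p - 1) p (p + 1) c0 c1 c c' ltac:(lra) (v_step (p - 1) (p + 1) ltac:(lra)) Hc Hc') in Z.
  pose proof (deficit_ge0 v (p - 1) p c0 c ltac:(lra) (v_step (p - 1) p ltac:(lra)) H0 Hc).
  pose proof (deficit_ge0 v p (p + 1) c' c1 ltac:(lra) (v_step p (p + 1) ltac:(lra)) Hc' H1).
  pose proof (jump_deficit_ge0 p c c').
  destruct (jump_deficit_eq0_inv p c c' ltac:(lra) Hne). lra.
Qed.

End Minimizer.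

End Calibration.

(** * Oblique staircases *)

Lemma jumps_lattice v d : jumps_of_size d v -> forall a b, a < b -> is_step a b v ->
  forall c0 c1, right_trace v a c0 -> left_trace v b c1 -> exists k, c1 - c0 = d * IZR k.
Proof.
  intros Hjumps. apply (is_step_ind v (fun a b => forall c0 c1, right_trace v a c0 -> left_trace v b c1 ->
                                         exists k, c1 - c0 = d * IZR k)).
  - intros a b c Hab Hc c0 c1 H0 H1. destruct (const_on_traces v a b c c0 c1 Hab Hc H0 H1) as [-> ->].
    exists 0%Z. simpl. ring.
  - intros a p b Hp S1 S2 IH1 IH2 c0 c1 H0 H1.
    destruct (is_step_left_trace a p v p S1) as [c Hc]; [lra |].
    destruct (is_step_right_trace p b v p S2) as [c' Hc']; [lra |].
    destruct (IH1 c0 c H0 Hc) as [k1 E1]. destruct (IH2 c' c1 Hc' H1) as [k2 E2].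
    destruct (Req_dec c c') as [<- | Hne].
    + exists (k1 + k2)%Z. rewrite plus_IZR. lra.
    + pose proof (Hjumps p c c' Hc Hc' Hne). exists (k1 + k2 + 1)%Z. rewrite !plus_IZR. simpl. lra.
Qed.

Lemma locally_const_lattice v d x y : S_loc v -> jumps_of_size d v ->
  locally_const v x -> locally_const v y -> exists k, v y - v x = d * IZR k.
Proof.
  intros Hv Hjumps Lx Ly. destruct (Rtotal_order x y) as [Hxy | [<- | Hxy]].
  - exact (jumps_lattice v d Hjumps x y Hxy (Hv x y Hxy) _ _
             (locally_const_right_trace v x Lx) (locally_const_left_trace v y Ly)).
  - exists 0%Z. simpl. ring.
  - destruct (jumps_lattice v d Hjumps y x Hxy (Hv y x Hxy) _ _
                (locally_const_right_trace v y Ly) (locally_const_left_trace v x Lx)) as [k Hk].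
    exists (- k)%Z. rewrite opp_IZR. lra.
Qed.

Lemma exists_locally_const v : S_loc v -> exists x, locally_const v x.
Proof.
  intros Hv. destruct (is_step_right_trace 0 1 v 0 (Hv 0 1 ltac:(lra))) as [c [e [He H]]]; [lra |].
  exists (e / 2). apply (locally_const_of_const_on v 0 e c); [| lra].
  apply (const_on_sub v 0 (0 + e)); [exact H | lra | lra].
Qed.

Lemma eq_of_close_mod u w z Y k : Rabs (u - z) <= Y -> Rabs (w - z) < Y -> u - w = 2 * Y * IZR k -> u = w.
Proof.
  intros Hu Hw E. apply Rabs_le_between in Hu. apply Rabs_def2 in Hw.
  assert (Hk : IZR (-1) < IZR k < IZR 1).
  { simpl. split; apply Rmult_lt_reg_l with (2 * Y); nra. }
  destruct Hk as [Hk1 Hk2]. apply lt_IZR in Hk1, Hk2. replace k with 0%Z in E by lia. simpl in E. lra.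
Qed.

Lemma same_class_right_trace v w p c : same_class v w -> right_trace v p c -> right_trace w p c.
Proof.
  intros Hvw [e [He H]]. destruct (Hvw (p - 1) (p + 1)) as [l Hl]; [lra |].
  destruct (finite_gap l p) as [e' [He' Hgap]].
  Rmin_facts 1 (Rmin e e'); Rmin_facts e e'. set (r := Rmin 1 (Rmin e e')) in *.
  assert (0 < r) by (repeat apply Rmin_pos; lra).
  exists r; split; [assumption |]. intros x Hx. rewrite <- Hl; [apply H; lra | lra |].
  intros Hin. apply (Hgap x Hin); lra.
Qed.

Lemma same_class_left_trace v w p c : same_class v w -> left_trace v p c -> left_trace w p c.
Proof.
  intros Hvw [e [He H]]. destruct (Hvw (p - 1) (p + 1)) as [l Hl]; [lra |].
  destruct (finite_gap l p) as [e' [He' Hgap]].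
  Rmin_facts 1 (Rmin e e'); Rmin_facts e e'. set (r := Rmin 1 (Rmin e e')) in *.
  assert (0 < r) by (repeat apply Rmin_pos; lra).
  exists r; split; [assumption |]. intros x Hx. rewrite <- Hl; [apply H; lra | lra |].
  intros Hin. apply (Hgap x Hin); lra.
Qed.

Lemma same_class_ext v w w' : (forall x, w x = w' x) -> same_class v w -> same_class v w'.
Proof. intros E H a b Hab. destruct (H a b Hab) as [l Hl]. exists l. intros. rewrite <- E. auto. Qed.

Lemma same_class_of_locally_const v w : S_loc v -> (forall x, locally_const v x -> v x = w x) -> same_class v w.
Proof.
  intros Hv H a b Hab. destruct (Hv a b Hab) as [l Hl]. exists l. intros x Hx Hn.
  apply H. exact (step_on_locally_const l a b v x Hl Hx Hn).
Qed.

Definition shifted_stair (H Y tau x : R) : R := stairHV H Y (x - H * tau) + Y * tau.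

Section Staircase.

Variables M H Y : R.
Hypothesis M_pos : 0 < M.
Hypothesis H_pos : 0 < H.
Hypothesis Y_eq : Y = M * H.

Lemma stair_height_pos : 0 < Y.
Proof. rewrite Y_eq. nra. Qed.

Section Phase.

Variable tau : R.

(* [shifted_stair H Y tau] jumps where the phase crosses an integer. *)
Let phase x := ((x - H * tau) / H + 1) / 2.

Lemma shifted_stair_phase x : shifted_stair H Y tau x = Y * (2 * IZR (floor (phase x)) + tau).
Proof. unfold shifted_stair, stairHV, stair, phase. ring. Qed.

Lemma slope_phase x : M * x = Y * (2 * phase x - 1 + tau).
Proof. unfold phase. rewrite Y_eq. field. lra. Qed.

Lemma shifted_stair_near x : Rabs (shifted_stair H Y tau x - M * x) <= Y.
Proof.
  rewrite shifted_stair_phase, slope_phase. pose proof (floor_spec (phase x)). pose proof stair_height_pos.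
  apply Rabs_le. split; nra.
Qed.

Lemma shifted_stair_mono x y : x <= y -> shifted_stair H Y tau x <= shifted_stair H Y tau y.
Proof.
  intros Hxy. rewrite !shifted_stair_phase. pose proof stair_height_pos.
  assert (phase x <= phase y).
  { unfold phase. apply Rmult_le_compat_r; [lra |]. apply Rplus_le_compat_r, Rmult_le_compat_r; [left; apply Rinv_0_lt_compat |]; lra. }
  apply floor_le, IZR_le in H1. nra.
Qed.

Lemma shifted_stair_right x : exists d, 0 < d /\ forall y, x < y < x + d ->
  shifted_stair H Y tau y = shifted_stair H Y tau x /\ Rabs (shifted_stair H Y tau y - M * y) < Y.
Proof.
  set (n := floor (phase x)). pose proof (floor_spec (phase x)) as Fx. fold n in Fx.
  exists (2 * H * (IZR n + 1 - phase x)). split; [nra |]. intros y Hy.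
  assert (Ey : phase y = phase x + (y - x) / (2 * H)) by (unfold phase; field; lra).
  assert (0 < (y - x) / (2 * H)) by (apply Rdiv_lt_0_compat; lra).
  assert ((y - x) / (2 * H) < IZR n + 1 - phase x) by (apply Rlt_div_l; lra).
  assert (Fy : floor (phase y) = n) by (apply floor_eq; lra).
  rewrite !shifted_stair_phase, slope_phase, Fy. fold n. split; [reflexivity |].
  pose proof stair_height_pos. apply Rabs_def1; nra.
Qed.

Lemma traces_in_band_of_stair v : same_class v (shifted_stair H Y tau) -> traces_in_band M Y v.
Proof.
  intros Hv p c [Hc | Hc].
  - destruct (same_class_right_trace v _ p c Hv Hc) as [e [He E]].
    apply Rabs_le. split.
    + pose proof (shifted_stair_near (p + e / 2)) as B. rewrite E in B by lra.
      apply Rabs_le_between in B. nra.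
    + apply (affine_le_left_end M p (p + e)); [lra | lra |]. intros x Hx.
      pose proof (shifted_stair_near x) as B. rewrite E in B by lra. apply Rabs_le_between in B. lra.
  - destruct (same_class_left_trace v _ p c Hv Hc) as [e [He E]].
    apply Rabs_le. split.
    + apply (affine_ge_right_end M (p - e) p); [lra | lra |]. intros x Hx.
      pose proof (shifted_stair_near x) as B. rewrite E in B by lra. apply Rabs_le_between in B. lra.
    + pose proof (shifted_stair_near (p - e / 2)) as B. rewrite E in B by lra.
      apply Rabs_le_between in B. nra.
Qed.

Lemma jumps_of_size_of_stair v : same_class v (shifted_stair H Y tau) -> jumps_of_size (2 * Y) v.
Proof.
  intros Hv p c c' Hc Hc' Hne.
  pose proof (traces_in_band_of_stair v Hv p c (or_intror Hc)) as Bc.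
  pose proof (traces_in_band_of_stair v Hv p c' (or_introl Hc')) as Bc'.
  apply Rabs_le_between in Bc, Bc'.
  destruct (same_class_left_trace v _ p c Hv Hc) as [e [He E]].
  destruct (same_class_right_trace v _ p c' Hv Hc') as [e' [He' E']].
  Rmin_facts e e'. set (r := Rmin e e') in *. assert (0 < r) by (apply Rmin_pos; lra).
  pose proof (shifted_stair_mono (p - r / 2) (p + r / 2) ltac:(lra)) as Hmono.
  rewrite !shifted_stair_phase in Hmono.
  rewrite <- (E (p - r / 2)), <- (E' (p + r / 2)), !shifted_stair_phase in Hne |- * by lra.
  rewrite <- (E (p - r / 2)), shifted_stair_phase in Bc by lra.
  rewrite <- (E' (p + r / 2)), shifted_stair_phase in Bc' by lra.
  set (n1 := floor (phase (p - r / 2))) in *. set (n2 := floor (phase (p + r / 2))) in *.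
  pose proof stair_height_pos.
  assert (K1 : IZR n1 <= IZR n2) by nra.
  assert (K2 : IZR n2 - IZR n1 <= 1) by nra.
  assert (K3 : n1 <> n2) by (intros Heq; apply Hne; rewrite Heq; reflexivity).
  apply le_IZR in K1. rewrite <- minus_IZR in K2. apply le_IZR in K2.
  replace n2 with (n1 + 1)%Z by lia. rewrite plus_IZR. simpl. ring.
Qed.

End Phase.

Lemma stair_of_band v : S_loc v -> traces_in_band M Y v -> jumps_of_size (2 * Y) v ->
  exists tau, -1 <= tau <= 1 /\ same_class v (shifted_stair H Y tau).
Proof.
  intros Hv Hband Hjumps. pose proof stair_height_pos.
  destruct (exists_locally_const v Hv) as [x0 L0].
  set (k0 := floor ((v x0 / Y + 1) / 2)). pose proof (floor_spec ((v x0 / Y + 1) / 2)) as F0. fold k0 in F0.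
  set (tau := v x0 / Y - 2 * IZR k0). exists tau.
  split; [unfold tau; split; apply Rmult_le_reg_r with (/ 2); nra |].
  apply same_class_of_locally_const; [exact Hv |]. intros x [e [He Ex]].
  destruct (shifted_stair_right tau x) as [d [Hd Hright]].
  Rmin_facts e d. set (y := x + Rmin e d / 2).
  assert (0 < Rmin e d) by (apply Rmin_pos; lra).
  destruct (Hright y ltac:(unfold y; lra)) as [Sy Ny].
  assert (Vy : v y = v x) by (apply Ex; unfold y; lra).
  assert (Ly : locally_const v y).
  { exists (Rmin e d / 2). split; [lra |]. intros z Hz. rewrite Vy. apply Ex. unfold y in Hz. lra. }
  destruct (locally_const_lattice v (2 * Y) x0 y Hv Hjumps L0 Ly) as [k Hk].
  pose proof (Hband y (v y) (or_introl (locally_const_right_trace v y Ly))) as By.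
  rewrite <- Vy, <- Sy.
  apply (eq_of_close_mod _ _ (M * y) Y (k0 + k - floor (((y - H * tau) / H + 1) / 2))); [exact By | exact Ny |].
  rewrite shifted_stair_phase, !minus_IZR, plus_IZR.
  replace (v y) with (v x0 + (v y - v x0)) by ring. rewrite Hk. unfold tau. field. lra.
Qed.

End Staircase.

Lemma Hpar_pos al be M : 0 < Hpar al be M.
Proof. unfold Hpar, Rpower. pose proof (exp_pos (/ 3 * ln (6 * al / (be * M ^ 2)))). lra. Qed.

Lemma al_eq_Vpar al be M : 0 < al -> 0 < be -> M <> 0 ->
  al = 4 * be * Vpar al be M ^ 3 / (3 * M).
Proof.
  intros Hal Hbe HM. assert (HM2 : 0 < M ^ 2) by (apply pow2_gt_0; exact HM).
  set (r := 6 * al / (be * M ^ 2)).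
  assert (Hr : 0 < r) by (apply Rdiv_lt_0_compat; [lra | nra]).
  assert (Hcube : Rpower r (/ 3) ^ 3 = r).
  { rewrite <- (Rpower_pow 3 (Rpower r (/ 3))) by (unfold Rpower; apply exp_pos). rewrite Rpower_mult.
    replace (/ 3 * INR 3) with 1 by (simpl; field). apply Rpower_1, Hr. }
  unfold Vpar, Hpar. fold r. rewrite Rpow_mult_distr.
  replace ((/ 2 * Rpower r (/ 3)) ^ 3) with (/ 8 * Rpower r (/ 3) ^ 3) by field.
  rewrite Hcube. unfold r. field. split; lra.
Qed.

Lemma oblique_eq al be M tau x : M <> 0 ->
  oblique al be M tau x = shifted_stair (Hpar al be M) (Vpar al be M) tau x.
Proof. intros HM. unfold oblique. destruct (Req_EM_T M 0); [contradiction | reflexivity]. Qed.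

Definition is_oblique (al be M : R) (v : R -> R) : Prop :=
  S_loc v /\ exists tau, -1 <= tau <= 1 /\ same_class v (oblique al be M tau).

Theorem entire_local_minimizer_pos al be M v : 0 < al -> 0 < be -> 0 < M ->
  entire_local_minimizer al be (fun x => M * x) v <-> is_oblique al be M v.
Proof.
  intros Hal Hbe HM. set (H := Hpar al be M). set (Y := Vpar al be M).
  assert (HH : 0 < H) by apply Hpar_pos.
  assert (HY : Y = M * H) by reflexivity.
  assert (HY0 : 0 < Y) by (rewrite HY; nra).
  assert (Hal_eq : al = 4 * be * Y ^ 3 / (3 * M)) by (apply al_eq_Vpar; lra).
  assert (Hob : forall tau x, shifted_stair H Y tau x = oblique al be M tau x)
    by (intros; symmetry; apply oblique_eq; lra).
  split.
  - intros Hmin. split; [exact (proj1 Hmin) |].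
    destruct (stair_of_band M H Y HM HH HY v (proj1 Hmin)
                (minimizer_traces_in_band al be M Y Hbe HM HY0 Hal_eq v Hmin)
                (minimizer_jumps_of_size al be M Y Hbe HM HY0 Hal_eq v Hmin)) as [tau [Htau Hc]].
    exists tau. split; [exact Htau | exact (same_class_ext v _ _ (Hob tau) Hc)].
  - intros [Hv [tau [_ Hc]]].
    assert (Hc' : same_class v (shifted_stair H Y tau))
      by (apply (same_class_ext v (oblique al be M tau)); [intros; symmetry; apply Hob | exact Hc]).
    apply (minimizer_of_band al be M Y Hbe HM HY0 Hal_eq v Hv).
    + exact (traces_in_band_of_stair M H Y HM HH HY tau v Hc').
    + exact (jumps_of_size_of_stair M H Y HM HH HY tau v Hc').
Qed.

(** * The case M = 0 *)

Section ZeroSlope.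

Variables al be : R.
Hypothesis al_pos : 0 < al.
Hypothesis be_pos : 0 < be.

Lemma two_jump_competitor a b e c0 c1 : 0 < e -> a + e < b - e ->
  exists u, is_step a b u /\ right_trace u a c0 /\ left_trace u b c1 /\
            energy al be 0 u a b <= 2 * al + be * (c0 ^ 2 + c1 ^ 2) * e.
Proof.
  intros He Hab.
  set (u := fun x => if Rlt_dec x (a + e) then c0 else if Rlt_dec x (b - e) then 0 else c1).
  assert (U1 : const_on u a (a + e) c0) by (intros x Hx; unfold u; destruct (Rlt_dec x (a + e)); [reflexivity | lra]).
  assert (U2 : const_on u (a + e) (b - e) 0).
  { intros x Hx; unfold u. destruct (Rlt_dec x (a + e)); [lra |]. destruct (Rlt_dec x (b - e)); [reflexivity | lra]. }
  assert (U3 : const_on u (b - e) b c1).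
  { intros x Hx; unfold u. destruct (Rlt_dec x (a + e)); [lra |]. destruct (Rlt_dec x (b - e)); [lra | reflexivity]. }
  assert (S23 : is_step (a + e) b u) by (apply (is_step_glue _ (b - e)); [lra | exact (is_step_const _ _ _ _ U2) | exact (is_step_const _ _ _ _ U3)]).
  assert (S : is_step a b u) by (apply (is_step_glue _ (a + e)); [lra | exact (is_step_const _ _ _ _ U1) | exact S23]).
  exists u. split; [exact S |].
  split; [apply (right_trace_of_const u a (a + e)); [exact U1 | lra] |].
  split; [apply (left_trace_of_const u (b - e) b); [exact U3 | lra] |].
  rewrite (energy_split al be 0 u a (a + e) b c0 0 ltac:(lra) S) by
    (first [apply (left_trace_of_const u a (a + e)) | apply (right_trace_of_const u (a + e) (b - e))]; auto; lra).
  rewrite (energy_split al be 0 u (a + e) (b - e) b 0 c1 ltac:(lra) S23) by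
    (first [apply (left_trace_of_const u (a + e) (b - e)) | apply (right_trace_of_const u (b - e) b)]; auto; lra).
  rewrite (energy_const _ _ _ u a (a + e) c0), (energy_const _ _ _ u (a + e) (b - e) 0),
          (energy_const _ _ _ u (b - e) b c1) by (auto; lra).
  assert (forall c c', INR (jump_ind c c') <= 1) by (intros; unfold jump_ind; destruct (Req_EM_T c c'); simpl; lra).
  pose proof (H c0 0). pose proof (H 0 c1). unfold bulk_const.
  replace (a + e - a) with e by ring. replace (b - (b - e)) with e by ring. nra.
Qed.

Lemma no_jumps_energy v a b : a < b -> is_step a b v -> (forall x, a < x < b -> ~ is_jump v x) ->
  forall c, right_trace v a c -> left_trace v b c /\ energy al be 0 v a b = be * c ^ 2 * (b - a).
Proof.
  revert a b. apply (is_step_ind v (fun a b => (forall x, a < x < b -> ~ is_jump v x) ->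
    forall c, right_trace v a c -> left_trace v b c /\ energy al be 0 v a b = be * c ^ 2 * (b - a))).
  - intros a b c' Hab H _ c Hc. assert (c = c') by (apply (right_trace_unique v a); [| apply (right_trace_of_const v a b)]; auto; lra).
    subst c'. split; [apply (left_trace_of_const v a b); auto; lra |].
    rewrite (energy_const al be 0 v a b c Hab H). unfold bulk_const. field.
  - intros a p b Hp S1 S2 IH1 IH2 NJ c Hc.
    destruct (IH1 ltac:(intros; apply NJ; lra) c Hc) as [L1 E1].
    destruct (is_step_right_trace p b v p S2) as [c' Hc']; [lra |].
    assert (c = c') by (apply NNPP; intros Hne; apply (NJ p Hp), (is_jump_iff v p c c' L1 Hc'); exact Hne).
    subst c'. destruct (IH2 ltac:(intros; apply NJ; lra) c Hc') as [L2 E2].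
    split; [exact L2 |]. rewrite (energy_split al be 0 v a p b c c Hp (is_step_glue a p b v Hp S1 S2) L1 Hc').
    rewrite E1, E2. unfold jump_ind. destruct (Req_EM_T c c); [simpl; ring | contradiction].
Qed.

Section Minimizer.

Variable v : R -> R.
Hypothesis v_min : entire_local_minimizer al be (fun x => 0 * x) v.

Let v_step a b : a < b -> is_step a b v := proj1 v_min a b.

Lemma minimizer0_energy_lt a b : a < b -> energy al be 0 v a b < 3 * al.
Proof.
  intros Hab.
  destruct (is_step_right_trace a b v a (v_step a b Hab)) as [c0 H0]; [lra |].
  destruct (is_step_left_trace a b v b (v_step a b Hab)) as [c1 H1]; [lra |].
  set (K := be * (c0 ^ 2 + c1 ^ 2) + 1). assert (0 < K) by (unfold K; pose proof (pow2_ge_0 c0); pose proof (pow2_ge_0 c1); nra).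
  Rmin_facts ((b - a) / 3) (al / (2 * K)). set (e := Rmin ((b - a) / 3) (al / (2 * K))) in *.
  assert (0 < e) by (apply Rmin_pos; [lra | apply Rdiv_lt_0_compat; lra]).
  apply Rle_div_r in H3; [| lra].
  destruct (two_jump_competitor a b e c0 c1 H4 ltac:(lra)) as [u [Hu [U0 [U1 Hcost]]]].
  pose proof (minimizer_energy_le al be 0 v u a b c0 c1 v_min Hab Hu U0 U1 H0 H1).
  assert (be * (c0 ^ 2 + c1 ^ 2) * e <= K * e) by (apply Rmult_le_compat_r; unfold K; lra). lra.
Qed.

Lemma minimizer0_no_three_jumps x1 x2 x3 : x3 < x2 < x1 ->
  is_jump v x1 -> is_jump v x2 -> is_jump v x3 -> False.
Proof.
  intros Hx J1 J2 J3. set (a := x3 - 1). set (b := x1 + 1). assert (Hab : a < b) by (unfold a, b; lra).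
  pose proof (njumps_spec a b v Hab (v_step a b Hab)) as [l [Nl [Ll Hl]]].
  assert (Hincl : incl (x1 :: x2 :: x3 :: nil) l).
  { intros x [<- | [<- | [<- | []]]]; apply Hl; (split; [unfold a, b; lra | assumption]). }
  assert (Hnd : NoDup (x1 :: x2 :: x3 :: nil)).
  { repeat constructor; simpl; intros; intuition lra. }
  pose proof (NoDup_incl_length Hnd Hincl) as H3. simpl in H3. rewrite Ll in H3.
  pose proof (minimizer0_energy_lt a b Hab). pose proof (energy_ge_jumps al be 0 v a b ltac:(lra) Hab (v_step a b Hab)).
  apply le_INR in H3. simpl in H3. nra.
Qed.

Lemma minimizer0_no_jumps_left : exists A, forall x, x <= A -> ~ is_jump v x.
Proof.
  apply NNPP. intros Hn.
  assert (Hex : forall A, exists x, x <= A /\ is_jump v x).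
  { intros A. apply NNPP. intros HA. apply Hn. exists A. intros x Hx J. apply HA. now exists x. }
  destruct (Hex 0) as [x1 [_ J1]]. destruct (Hex (x1 - 1)) as [x2 [H2 J2]]. destruct (Hex (x2 - 1)) as [x3 [H3 J3]].
  apply (minimizer0_no_three_jumps x1 x2 x3); auto; lra.
Qed.

Lemma minimizer0_no_jumps_right : exists B, forall x, B <= x -> ~ is_jump v x.
Proof.
  apply NNPP. intros Hn.
  assert (Hex : forall B, exists x, B <= x /\ is_jump v x).
  { intros B. apply NNPP. intros HB. apply Hn. exists B. intros x Hx J. apply HB. now exists x. }
  destruct (Hex 0) as [x3 [_ J3]]. destruct (Hex (x3 + 1)) as [x2 [H2 J2]]. destruct (Hex (x2 + 1)) as [x1 [H1 J1]].
  apply (minimizer0_no_three_jumps x1 x2 x3); auto; lra.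
Qed.

(* A nonzero constant on a long jump-free half-line would cost more than [3 al]. *)
Lemma eq0_of_bounded_cost c : (forall T, 0 < T -> be * c ^ 2 * T < 3 * al) -> c = 0.
Proof.
  intros H. apply NNPP. intros Hc. assert (0 < be * c ^ 2) by (apply Rmult_lt_0_compat; [lra | apply pow2_gt_0; exact Hc]).
  specialize (H (3 * al / (be * c ^ 2) + 1) ltac:(pose proof (Rdiv_lt_0_compat (3 * al) _ ltac:(lra) H0); lra)).
  replace (be * c ^ 2 * (3 * al / (be * c ^ 2) + 1)) with (3 * al + be * c ^ 2) in H by (field; lra). lra.
Qed.

Lemma minimizer0_traces_vanish_left : exists A, forall p c, p < A -> right_trace v p c -> c = 0.
Proof.
  destruct minimizer0_no_jumps_left as [A NJ]. exists A.
  destruct (is_step_left_trace (A - 1) A v A (v_step (A - 1) A ltac:(lra))) as [cA HA]; [lra |].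
  assert (Key : forall p c, p < A -> right_trace v p c -> c = cA /\ energy al be 0 v p A = be * c ^ 2 * (A - p)).
  { intros p c Hp Hc. destruct (no_jumps_energy v p A Hp (v_step p A Hp) ltac:(intros; apply NJ; lra) c Hc) as [L E].
    split; [exact (left_trace_unique v A c cA L HA) | exact E]. }
  assert (cA = 0).
  { apply eq0_of_bounded_cost. intros T HT.
    destruct (is_step_right_trace (A - T) A v (A - T) (v_step (A - T) A ltac:(lra))) as [c Hc]; [lra |].
    destruct (Key (A - T) c ltac:(lra) Hc) as [-> E].
    pose proof (minimizer0_energy_lt (A - T) A ltac:(lra)). replace (A - (A - T)) with T in E by ring. lra. }
  intros p c Hp Hc. destruct (Key p c Hp Hc). lra.
Qed.

Lemma minimizer0_traces_vanish_right : exists B, forall p c, B < p -> left_trace v p c -> c = 0.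
Proof.
  destruct minimizer0_no_jumps_right as [B NJ]. exists B.
  destruct (is_step_right_trace B (B + 1) v B (v_step B (B + 1) ltac:(lra))) as [cB HB]; [lra |].
  assert (Key : forall p, B < p -> left_trace v p cB /\ energy al be 0 v B p = be * cB ^ 2 * (p - B))
    by (intros p Hp; exact (no_jumps_energy v B p Hp (v_step B p Hp) ltac:(intros; apply NJ; lra) cB HB)).
  assert (cB = 0).
  { apply eq0_of_bounded_cost. intros T HT. destruct (Key (B + T) ltac:(lra)) as [_ E].
    pose proof (minimizer0_energy_lt B (B + T) ltac:(lra)). replace (B + T - B) with T in E by ring. lra. }
  intros p c Hp Hc. rewrite (left_trace_unique v p c cB Hc (proj1 (Key p Hp))). assumption.
Qed.

(* Comparison with the zero function on a large interval leaves no room for jumps. *)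
Lemma minimizer0_locally_const_zero x : locally_const v x -> v x = 0.
Proof.
  intros Lx. destruct minimizer0_traces_vanish_left as [A HA]. destruct minimizer0_traces_vanish_right as [B HB].
  set (a := Rmin A x - 1). set (b := Rmax B x + 1).
  assert (Ha : a < Rmin A x) by (unfold a; lra). pose proof (Rmin_l A x). pose proof (Rmin_r A x).
  assert (Hb : Rmax B x < b) by (unfold b; lra). pose proof (Rmax_l B x). pose proof (Rmax_r B x).
  assert (Hab : a < b) by lra.
  destruct (is_step_right_trace a b v a (v_step a b Hab)) as [c0 T0]; [lra |].
  destruct (is_step_left_trace a b v b (v_step a b Hab)) as [c1 T1]; [lra |].
  assert (c0 = 0) by (apply (HA a); [lra | exact T0]). subst c0.
  assert (c1 = 0) by (apply (HB b); [lra | exact T1]). subst c1.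
  assert (Z : const_on (fun _ => 0) a b 0) by (intros y _; reflexivity).
  pose proof (minimizer_energy_le al be 0 v _ a b 0 0 v_min Hab (is_step_const _ _ _ _ Z)
                (right_trace_of_const _ a b 0 a Z ltac:(lra)) (left_trace_of_const _ a b 0 b Z ltac:(lra)) T0 T1) as Hcmp.
  rewrite (energy_const al be 0 _ a b 0 Hab Z) in Hcmp. unfold bulk_const in Hcmp.
  pose proof (energy_ge_jumps al be 0 v a b ltac:(lra) Hab (v_step a b Hab)) as Hjumps.
  assert (E : njumps a b v = 0%nat).
  { destruct (njumps a b v) as [| n] eqn:En; [reflexivity |]. rewrite S_INR in Hjumps. pose proof (pos_INR n). nra. }
  assert (NJ : forall y, a < y < b -> ~ is_jump v y).
  { intros y Hy J. pose proof (njumps_spec a b v Hab (v_step a b Hab)) as [l [_ [Ll Hl]]].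
    rewrite E in Ll. destruct l; [| discriminate]. apply (proj2 (Hl y)). split; assumption. }
  destruct (no_jumps_energy v a x ltac:(lra) (v_step a x ltac:(lra)) ltac:(intros; apply NJ; lra) 0 T0) as [Lx0 _].
  exact (left_trace_unique v x _ _ (locally_const_left_trace v x Lx) Lx0).
Qed.

End Minimizer.

Lemma energy_zero_traces v a b : (forall p c, right_trace v p c -> c = 0) -> (forall p c, left_trace v p c -> c = 0) ->
  a < b -> is_step a b v -> energy al be 0 v a b = 0.
Proof.
  intros TR TL. revert a b. apply (is_step_ind v (fun a b => energy al be 0 v a b = 0)).
  - intros a b c Hab H. rewrite (energy_const al be 0 v a b c Hab H).
    rewrite (TR a c) by (apply (right_trace_of_const v a b); auto; lra). unfold bulk_const. field.
  - intros a p b Hp S1 S2 E1 E2.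
    destruct (is_step_left_trace a p v p S1) as [c Hc]; [lra |].
    destruct (is_step_right_trace p b v p S2) as [c' Hc']; [lra |].
    rewrite (energy_split al be 0 v a p b c c' Hp (is_step_glue a p b v Hp S1 S2) Hc Hc').
    rewrite E1, E2, (TL p c Hc), (TR p c' Hc'). unfold jump_ind. destruct (Req_EM_T 0 0); [simpl; ring | contradiction].
Qed.

Theorem entire_local_minimizer_zero v :
  entire_local_minimizer al be (fun x => 0 * x) v <-> is_oblique al be 0 v.
Proof.
  assert (Hob : forall tau x, 0 = oblique al be 0 tau x)
    by (intros; unfold oblique; destruct (Req_EM_T 0 0); [reflexivity | contradiction]).
  split.
  - intros Hmin. split; [exact (proj1 Hmin) |]. exists 0. split; [lra |].
    apply (same_class_ext v (fun _ => 0)); [apply Hob |].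
    apply same_class_of_locally_const; [exact (proj1 Hmin) |]. intros x Lx.
    exact (minimizer0_locally_const_zero v Hmin x Lx).
  - intros [Hv [tau [_ Hc]]].
    assert (Hc0 : same_class v (fun _ => 0)) by (apply (same_class_ext v (oblique al be 0 tau)); [intros; symmetry; apply Hob | exact Hc]).
    assert (TR : forall p c, right_trace v p c -> c = 0).
    { intros p c H. destruct (same_class_right_trace v _ p c Hc0 H) as [e [He E]]. rewrite <- (E (p + e / 2)); [reflexivity | lra]. }
    assert (TL : forall p c, left_trace v p c -> c = 0).
    { intros p c H. destruct (same_class_left_trace v _ p c Hc0 H) as [e [He E]]. rewrite <- (E (p - e / 2)); [reflexivity | lra]. }
    split; [exact Hv |]. intros a b Hab. split; [apply Hv; exact Hab |].
    intros u Hu _ n m Hn Hm.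
    rewrite (G_with_energy al be 0 v a b n Hab (Hv a b Hab) Hn), (G_with_energy al be 0 u a b m Hab Hu Hm).
    rewrite (energy_zero_traces v a b TR TL Hab (Hv a b Hab)).
    pose proof (energy_ge_jumps al be 0 u a b ltac:(lra) Hab Hu). pose proof (pos_INR (njumps a b u)). nra.
Qed.

End ZeroSlope.

(** * The case M < 0 and the theorem *)

Definition opp_fun (u : R -> R) : R -> R := fun x => - u x.

Lemma opp_fun_involutive u : opp_fun (opp_fun u) = u.
Proof. apply functional_extensionality. intros x. unfold opp_fun. ring. Qed.

Lemma is_step_opp a b u : is_step a b u -> is_step a b (opp_fun u).
Proof. intros [l [Hl Hs]]. exists l. split; [exact Hl |]. intros x y H1 H2 H3 H4. unfold opp_fun. now rewrite (Hs x y). Qed.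

Lemma is_jump_opp u x : is_jump u x -> is_jump (opp_fun u) x.
Proof.
  intros J eps He. destruct (J eps He) as [y [z [H1 [H2 [H3 [H4 H5]]]]]].
  exists y, z. repeat split; auto. unfold opp_fun. intros E. apply H5. lra.
Qed.

Lemma jump_count_opp a b u n : jump_count a b u n -> jump_count a b (opp_fun u) n.
Proof.
  intros [l [N [L H]]]. exists l. split; [exact N | split; [exact L |]]. intros x. rewrite H.
  split; intros [Hx J]; split; auto; [now apply is_jump_opp | rewrite <- (opp_fun_involutive u); now apply is_jump_opp].
Qed.

Lemma G_with_opp al be M a b u n :
  G_with al be (fun x => - M * x) a b (opp_fun u) n = G_with al be (fun x => M * x) a b u n.
Proof.
  unfold G_with, opp_fun. do 3 f_equal. apply functional_extensionality. intros x. ring.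
Qed.

Lemma same_traces_opp a b u v : same_traces a b u v -> same_traces a b (opp_fun u) (opp_fun v).
Proof.
  intros [[e1 [He1 H1]] [e2 [He2 H2]]]. unfold opp_fun.
  split; [exists e1 | exists e2]; split; auto; intros x Hx; [rewrite H1 | rewrite H2]; auto.
Qed.

Lemma entire_local_minimizer_opp_of al be M v : entire_local_minimizer al be (fun x => M * x) v ->
  entire_local_minimizer al be (fun x => - M * x) (opp_fun v).
Proof.
  intros [Hv Hmin]. split; [intros a b Hab; apply is_step_opp, Hv, Hab |].
  intros a b Hab. destruct (Hmin a b Hab) as [Hva Hle]. split; [now apply is_step_opp |].
  intros u Hu Htr n m Hn Hm. rewrite G_with_opp, <- (opp_fun_involutive u), G_with_opp.
  apply Hle.
  - now apply is_step_opp.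
  - rewrite <- (opp_fun_involutive v). now apply same_traces_opp.
  - rewrite <- (opp_fun_involutive v). now apply jump_count_opp.
  - now apply jump_count_opp.
Qed.

Lemma entire_local_minimizer_opp al be M v : entire_local_minimizer al be (fun x => M * x) v <->
  entire_local_minimizer al be (fun x => - M * x) (opp_fun v).
Proof.
  split; [apply entire_local_minimizer_opp_of |]. intros Hmin.
  apply entire_local_minimizer_opp_of in Hmin. rewrite opp_fun_involutive in Hmin.
  replace (fun x => - - M * x) with (fun x => M * x) in Hmin; [exact Hmin |].
  apply functional_extensionality. intros x. ring.
Qed.

Lemma oblique_opp al be M tau x : oblique al be (- M) tau x = - oblique al be M tau x.
Proof.
  unfold oblique. destruct (Req_EM_T (- M) 0), (Req_EM_T M 0); try lra.
  unfold Vpar, Hpar, stairHV. replace ((- M) ^ 2) with (M ^ 2) by ring. ring.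
Qed.

Lemma same_class_opp v w : same_class v w -> same_class (opp_fun v) (opp_fun w).
Proof. intros H a b Hab. destruct (H a b Hab) as [l Hl]. exists l. intros. unfold opp_fun. now rewrite Hl. Qed.

Lemma is_oblique_opp_of al be M v : is_oblique al be M v -> is_oblique al be (- M) (opp_fun v).
Proof.
  intros [Hv [tau [Htau Hc]]]. split; [intros a b Hab; apply is_step_opp, Hv, Hab |].
  exists tau. split; [exact Htau |]. apply (same_class_ext _ (opp_fun (oblique al be M tau))).
  - intros x. unfold opp_fun. now rewrite oblique_opp.
  - now apply same_class_opp.
Qed.

Lemma is_oblique_opp al be M v : is_oblique al be M v <-> is_oblique al be (- M) (opp_fun v).
Proof.
  split; [apply is_oblique_opp_of |]. intros H.
  apply is_oblique_opp_of in H. now rewrite Ropp_involutive, opp_fun_involutive in H.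
Qed.

Theorem proposition4p4 (alpha beta M : R) (halpha : 0 < alpha) (hbeta : 0 < beta)
  (v : R -> R) :
  entire_local_minimizer alpha beta (fun x => M * x) v <->
  (S_loc v /\ exists tau0, -1 <= tau0 <= 1 /\ same_class v (oblique alpha beta M tau0)).
Proof.
  change (entire_local_minimizer alpha beta (fun x => M * x) v <-> is_oblique alpha beta M v).
  destruct (Rtotal_order M 0) as [HM | [-> | HM]].
  - rewrite entire_local_minimizer_opp, is_oblique_opp. apply entire_local_minimizer_pos; lra.
  - exact (entire_local_minimizer_zero alpha beta halpha hbeta v).
  - exact (entire_local_minimizer_pos alpha beta M v halpha hbeta HM).
Qed.
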